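(* Under the hypotheses of the setting below (restriction $r=(\sigma^{\mathrm{ASY}}+\delta)\mathbf 1$ with $\delta>0$, Assumptions A, B, C), let $\epsilon_i>0$, $i=1,\dots,N$, be arbitrary. Then there exists a finite time $T_\delta>0$ such that for all $t\ge T_\delta$, $$\sum_{i=1}^Nc_i^\top x_i^t-J^{\mathrm{MILP}}\le\sum_{i=1}^N\big(c_i^\top x_i^t-J_i^{\mathrm{LP},t}\big)+\sum_{i=1}^N\|\mu_i^t\|_1\epsilon_i+\Gamma(\sigma^{\mathrm{ASY}}+\delta),$$ where $\Gamma=\frac{1}{\zeta_{\hat z}}\sum_{i=1}^N\big(\max_{x_i\in X_i}c_i^\top x_i-\min_{x_i\in X_i}c_i^\top x_i\big)$, $J^{\mathrm{MILP}}$ is the optimal cost of the MILP, and $J_i^{\mathrm{LP},t}=c_i^\top z_i^t+Mv_i^t$ is the optimal cost of (P1) at time $t$.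
   Context: Data: for each $i\in\{1,\dots,N\}$, $c_i\in\mathbb{R}^{n_i}$, $A_i\in\mathbb{R}^{S\times n_i}$ (rows $A_i^s$), nonempty compact $X_i=\{x_i\in\mathbb{Z}^{Z_i}\times\mathbb{R}^{R_i}:D_ix_i\preceq d_i\}$; $b\in\mathbb{R}^S$ with components $b_s$. $\preceq$ is componentwise, $\mathbf 1$ the all-ones vector. MILP: minimize $\sum_ic_i^\top x_i$ s.t. $\sum_iA_ix_i\preceq b$, $x_i\in X_i$ (assumed feasible). Restricted LP (LP$_r$): minimize $\sum_ic_i^\top z_i$ s.t. $\sum_iA_iz_i\preceq b-r$, $z_i\in\mathrm{conv}(X_i)$. Restriction: $L_i^s=\min_{x_i\in X_i}A_i^sx_i$; $(x_i^L,\tilde\ell_i)$ optimal for minimize $\ell_i$ over $x_i\in X_i,\ell_i\in\mathbb{R}$ s.t. $A_ix_i-L_i\preceq\ell_i\mathbf 1$; $\sigma^{\mathrm{ASY}}=(S+1)\max_i\max_s(A_i^sx_i^L-L_i^s)$; here $r=(\sigma^{\mathrm{ASY}}+\delta)\mathbf 1$ for a fixed $\delta>0$. Assumption A: (LP$_r$) is feasible with unique optimal solution. Assumption B: step-sizes $\alpha^t\ge0$, $\sum_t\alpha^t=\infty$, $\sum_t(\alpha^t)^2<\infty$. Assumption C (Slater): there exist $\hat z_i\in\mathrm{conv}(X_i)$ with $\zeta_{\hat z}:=\min_s\big(b_s-r_s-\sum_iA_i^s\hat z_i\big)>0$. Algorithm over a connected undirected graph with neighbor sets $\mathcal N_i$,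 parameter $M>0$ sufficiently large, initialization $\sum_iy_i^0=b-r$. At each $t$, agent $i$: (P1) computes a primal-dual optimal pair $((z_i^t,v_i^t),\mu_i^t)$ of: minimize $c_i^\top z_i+Mv_i$ over $z_i\in\mathrm{conv}(X_i)$, $v_i\ge0$, s.t. $A_iz_i\preceq y_i^t+v_i\mathbf 1$ ($\mu_i^t$ the multiplier of this constraint); (P2) $y_i^{t+1}=y_i^t+\alpha^t\sum_{j\in\mathcal N_i}(\mu_i^t-\mu_j^t)$; (P3) computes $x_i^t$ via: minimize lexicographically $(\rho_i,\xi_i)$ over $x_i\in X_i,\rho_i\ge0,\xi_i$ s.t. $c_i^\top x_i\le\xi_i$, $A_ix_i\preceq y_i^t+\rho_i\mathbf 1$ (first minimize $\rho_i$, then $c_i^\top x_i$ with $\rho_i$ fixed at its minimum). *)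

From Stdlib Require Import Reals Lra Lia ZArith Relations.
Open Scope R_scope.

(* Vectors of R^n are represented as functions nat -> R; only the
   coordinates k < n are meaningful. *)
Definition vec := nat -> R.

Fixpoint rsum (n : nat) (f : nat -> R) : R :=
  match n with O => 0 | S m => rsum m f + f m end.

Definition dot (n : nat) (u x : vec) : R := rsum n (fun k => u k * x k).
Definition norm1 (n : nat) (u : vec) : R := rsum n (fun k => Rabs (u k)).

Definition is_min_value {T : Type} (P : T -> Prop) (f : T -> R) (m : R) : Prop :=
  (exists x, P x /\ f x = m) /\ forall x, P x -> m <= f x.
Definition is_max_value {T : Type} (P : T -> Prop) (f : T -> R) (m : R) : Prop :=
  (exists x, P x /\ f x = m) /\ forall x, P x -> f x <= m.

(* X = { x in Z^nz x R^nr : D x <= d }, D having nd rows D l *)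
Definition mixed_int_poly (nz nr nd : nat) (D : nat -> vec) (d : vec) (x : vec) : Prop :=
  (forall k, (k < nz)%nat -> exists q : Z, x k = IZR q) /\
  (forall l, (l < nd)%nat -> dot (nz + nr) (D l) x <= d l).

Definition in_conv (n : nat) (X : vec -> Prop) (z : vec) : Prop :=
  exists (m : nat) (w : nat -> R) (p : nat -> vec),
    (forall j, (j < m)%nat -> 0 <= w j /\ X (p j)) /\
    rsum m w = 1 /\
    forall k, (k < n)%nat -> z k = rsum m (fun j => w j * p j k).

(* compactness in R^n (Heine-Borel: closed and bounded) *)
Definition bounded_set (n : nat) (X : vec -> Prop) : Prop :=
  exists B, forall x, X x -> forall k, (k < n)%nat -> Rabs (x k) <= B.
Definition closed_set (n : nat) (X : vec -> Prop) : Prop :=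
  forall (xs : nat -> vec) (x : vec), (forall m, X (xs m)) ->
    (forall k, (k < n)%nat -> Un_cv (fun m => xs m k) (x k)) -> X x.
Definition compact_set (n : nat) (X : vec -> Prop) : Prop :=
  bounded_set n X /\ closed_set n X.

(* ---------- Agent-local problem (P1) ----------
   minimize c^T z + M v over z in conv(X), v >= 0, s.t. A z <= y + v 1,
   with S coupling rows A s; mu is the multiplier of A z <= y + v 1. *)
Definition p1_feas (n S : nat) (A : nat -> vec) (X : vec -> Prop) (y : vec)
  (z : vec) (v : R) : Prop :=
  in_conv n X z /\ 0 <= v /\ forall s, (s < S)%nat -> dot n (A s) z <= y s + v.

Definition p1_cost (n : nat) (c : vec) (M : R) (z : vec) (v : R) : R :=
  dot n c z + M * v.

Definition p1_primal_opt n S c A X y M z v : Prop :=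
  p1_feas n S A X y z v /\
  forall z' v', p1_feas n S A X y z' v' -> p1_cost n c M z v <= p1_cost n c M z' v'.

Definition p1_lagr (n S : nat) (c : vec) (A : nat -> vec) (y : vec) (M : R)
  (z : vec) (v : R) (mu : vec) : R :=
  p1_cost n c M z v + rsum S (fun s => mu s * (dot n (A s) z - y s - v)).

(* a is a lower bound of the dual function q(mu) = inf_{z in conv X, v >= 0} L *)
Definition p1_dual_ge n S c A X y M (mu : vec) (a : R) : Prop :=
  forall z v, in_conv n X z -> 0 <= v -> a <= p1_lagr n S c A y M z v mu.

(* mu >= 0 maximizes the dual function q over mu >= 0 (q valued in extended reals) *)
Definition p1_dual_opt n S c A X y M (mu : vec) : Prop :=
  (forall s, (s < S)%nat -> 0 <= mu s) /\
  forall mu', (forall s, (s < S)%nat -> 0 <= mu' s) ->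
    forall a, p1_dual_ge n S c A X y M mu' a -> p1_dual_ge n S c A X y M mu a.

Definition p1_pd_opt n S c A X y M z v mu : Prop :=
  p1_primal_opt n S c A X y M z v /\ p1_dual_opt n S c A X y M mu.

Definition p3_rho_feas (n S : nat) (A : nat -> vec) (X : vec -> Prop) (y : vec) (rho : R) : Prop :=
  0 <= rho /\ exists x, X x /\ forall s, (s < S)%nat -> dot n (A s) x <= y s + rho.

Definition p3_lex_opt (n S : nat) (c : vec) (A : nat -> vec) (X : vec -> Prop) (y : vec) (x : vec) : Prop :=
  exists rho, is_min_value (p3_rho_feas n S A X y) (fun r => r) rho /\
    X x /\ (forall s, (s < S)%nat -> dot n (A s) x <= y s + rho) /\
    forall x', X x' -> (forall s, (s < S)%nat -> dot n (A s) x' <= y s + rho) ->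
      dot n c x <= dot n c x'.

Definition graph_edge (N : nat) (adj : nat -> nat -> bool) (i j : nat) : Prop :=
  (i < N)%nat /\ (j < N)%nat /\ adj i j = true.
Definition connected_undirected (N : nat) (adj : nat -> nat -> bool) : Prop :=
  (forall i j, adj i j = adj j i) /\ (forall i, adj i i = false) /\
  forall i j, (i < N)%nat -> (j < N)%nat -> clos_refl_trans nat (graph_edge N adj) i j.

From Stdlib Require Import Reals Lra Lia Relations List Classical ClassicalEpsilon.
Open Scope R_scope.

(* Slater's condition gives (LP_r) a Lagrange multiplier pi >= 0 with sum pi <= Gamma, and
   since the MILP optimum violates the constraints of (LP_r) by at most r = (sigma + delta) 1,
   J^{LP_r} <= J^{MILP} + Gamma r.  For M >= Gamma the penalty in (P1) is exact, so the local
   optimal costs of any allocation y of the resource b - r sum to at least J^{LP_r}.  The update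
   of y is a subgradient step for the dual of this allocation problem written in edge variables
   lam (y^t = y^0 + net flow of lam^t); the Fejer inequality with square-summable steps makes
   lam^t converge to an optimal allocation, so eventually y^t is within min eps_i of it and the
   subgradient inequality of (P1) gives sum_i J_i^{LP,t} <= J^{LP_r} + sum_i |mu_i^t|_1 eps_i.
   The terms c_i^T x_i^t then cancel. *)

(** * Finite sums and convex hulls *)

Lemma rsum_ext n f g : (forall i, (i < n)%nat -> f i = g i) -> rsum n f = rsum n g.
Proof.
  induction n as [|n IH]; intros H; simpl; [reflexivity|].
  rewrite IH, H; [reflexivity|lia|intros; apply H; lia].
Qed.

Lemma rsum_le n f g : (forall i, (i < n)%nat -> f i <= g i) -> rsum n f <= rsum n g.
Proof.
  induction n as [|n IH]; intros H; simpl; [lra|].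
  assert (rsum n f <= rsum n g) by (apply IH; intros; apply H; lia).
  assert (f n <= g n) by (apply H; lia). lra.
Qed.

Lemma rsum_plus n f g : rsum n (fun i => f i + g i) = rsum n f + rsum n g.
Proof. induction n; simpl; [lra|]. rewrite IHn. lra. Qed.

Lemma rsum_minus n f g : rsum n (fun i => f i - g i) = rsum n f - rsum n g.
Proof. induction n; simpl; [lra|]. rewrite IHn. lra. Qed.

Lemma rsum_scal n a f : rsum n (fun i => a * f i) = a * rsum n f.
Proof. induction n; simpl; [lra|]. rewrite IHn. lra. Qed.

Lemma rsum_opp n f : rsum n (fun i => - f i) = - rsum n f.
Proof. induction n; simpl; [lra|]. rewrite IHn. lra. Qed.

Lemma rsum_const n a : rsum n (fun _ => a) = INR n * a.
Proof. induction n; simpl rsum; [simpl; lra|]. rewrite IHn, S_INR. lra. Qed.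

Lemma rsum_swap n m f :
  rsum n (fun i => rsum m (fun j => f i j)) = rsum m (fun j => rsum n (fun i => f i j)).
Proof.
  induction n; simpl.
  - rewrite (rsum_const m 0). lra.
  - rewrite IHn, <- rsum_plus. reflexivity.
Qed.

Lemma rsum_app m1 m2 f : rsum (m1 + m2) f = rsum m1 f + rsum m2 (fun j => f (m1 + j)%nat).
Proof.
  induction m2; simpl.
  - rewrite Nat.add_0_r. lra.
  - rewrite Nat.add_succ_r. simpl. rewrite IHm2. lra.
Qed.

Lemma rsum_nonneg n f : (forall i, (i < n)%nat -> 0 <= f i) -> 0 <= rsum n f.
Proof. intros H. rewrite <- (Rmult_0_r (INR n)), <- rsum_const. apply rsum_le. exact H. Qed.

Lemma rsum_le_const n f a : (forall i, (i < n)%nat -> f i <= a) -> rsum n f <= INR n * a.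
Proof. intros H. rewrite <- rsum_const. apply rsum_le. exact H. Qed.

Lemma rsum_term_le n f k :
  (forall i, (i < n)%nat -> 0 <= f i) -> (k < n)%nat -> f k <= rsum n f.
Proof.
  induction n as [|n IH]; intros H Hk; [lia|]. simpl.
  assert (0 <= f n) by (apply H; lia).
  destruct (Nat.eq_dec k n) as [->|Hne].
  - assert (0 <= rsum n f) by (apply rsum_nonneg; intros; apply H; lia). lra.
  - assert (f k <= rsum n f) by (apply IH; [intros; apply H|]; lia). lra.
Qed.

Lemma rsum_abs n f : Rabs (rsum n f) <= rsum n (fun i => Rabs (f i)).
Proof.
  induction n; simpl; [rewrite Rabs_R0; lra|].
  eapply Rle_trans; [apply Rabs_triang|lra].
Qed.

Lemma rsum_antisym n (f : nat -> nat -> R) :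
  (forall i j, f i j = - f j i) -> rsum n (fun i => rsum n (fun j => f i j)) = 0.
Proof.
  intros H.
  assert (E : rsum n (fun i => rsum n (fun j => f i j)) = - rsum n (fun i => rsum n (fun j => f i j))).
  { rewrite rsum_swap at 1. rewrite <- rsum_opp. apply rsum_ext. intros i _.
    rewrite <- rsum_opp. apply rsum_ext. intros j _. apply H. }
  lra.
Qed.

Definition kdelta (i k : nat) : R := if Nat.eqb i k then 1 else 0.

Lemma rsum_kdelta n f k : (k < n)%nat -> rsum n (fun i => f i * kdelta i k) = f k.
Proof.
  induction n as [|n IH]; intros Hk; [lia|]. simpl. unfold kdelta at 2.
  destruct (Nat.eqb_spec n k) as [->|Hne].
  - rewrite (rsum_ext k _ (fun _ => 0)), rsum_const; [lra|].
    intros i Hi. unfold kdelta. destruct (Nat.eqb_spec i k); [lia|ring].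
  - rewrite IH by lia. ring.
Qed.

Lemma dot_lin n u a x b y :
  dot n u (fun k => a * x k + b * y k) = a * dot n u x + b * dot n u y.
Proof. unfold dot. rewrite <- !rsum_scal, <- rsum_plus. apply rsum_ext. intros; ring. Qed.

Lemma in_conv_of_mem n (X : vec -> Prop) x : X x -> in_conv n X x.
Proof.
  intros H. exists 1%nat, (fun _ => 1), (fun _ => x). split; [|split].
  - intros j _. split; [lra|exact H].
  - simpl. lra.
  - intros k _. simpl. lra.
Qed.

Lemma in_conv_comb n (X : vec -> Prop) z1 z2 th :
  0 <= th <= 1 -> in_conv n X z1 -> in_conv n X z2 ->
  in_conv n X (fun k => th * z1 k + (1 - th) * z2 k).
Proof.
  intros Hth [m1 [w1 [p1 [H1 [S1 E1]]]]] [m2 [w2 [p2 [H2 [S2 E2]]]]].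
  exists (m1 + m2)%nat,
    (fun j => if Nat.ltb j m1 then th * w1 j else (1 - th) * w2 (j - m1)%nat),
    (fun j => if Nat.ltb j m1 then p1 j else p2 (j - m1)%nat).
  split; [|split].
  - intros j Hj. destruct (Nat.ltb_spec j m1) as [Hlt|Hge].
    + destruct (H1 j Hlt). split; [apply Rmult_le_pos; lra|assumption].
    + destruct (H2 (j - m1)%nat ltac:(lia)). split; [apply Rmult_le_pos; lra|assumption].
  - rewrite rsum_app, (rsum_ext m1 _ (fun j => th * w1 j)),
      (rsum_ext m2 _ (fun j => (1 - th) * w2 j)), !rsum_scal, S1, S2; [lra| |].
    + intros i Hi. destruct (Nat.ltb_spec (m1 + i) m1); [lia|].
      do 2 f_equal. lia.
    + intros i Hi. destruct (Nat.ltb_spec i m1); [reflexivity|lia].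
  - intros k Hk. rewrite rsum_app, E1, E2 by assumption. rewrite <- !rsum_scal.
    f_equal; apply rsum_ext; intros i Hi.
    + destruct (Nat.ltb_spec i m1); [ring|lia].
    + destruct (Nat.ltb_spec (m1 + i) m1); [lia|].
      replace (m1 + i - m1)%nat with i by lia. ring.
Qed.

Lemma dot_in_conv n (X : vec -> Prop) u z : in_conv n X z ->
  exists m w p, (forall j, (j < m)%nat -> 0 <= w j /\ X (p j)) /\ rsum m w = 1 /\
    dot n u z = rsum m (fun j => w j * dot n u (p j)).
Proof.
  intros [m [w [p [H1 [S1 E1]]]]]. exists m, w, p. split; [assumption|split; [assumption|]].
  unfold dot. rewrite (rsum_ext n _ (fun k => rsum m (fun j => u k * (w j * p j k)))).
  - rewrite rsum_swap. apply rsum_ext. intros j Hj. rewrite <- rsum_scal.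
    apply rsum_ext. intros; ring.
  - intros k Hk. rewrite E1, <- rsum_scal by assumption. reflexivity.
Qed.

Lemma dot_in_conv_le n (X : vec -> Prop) u z B :
  in_conv n X z -> (forall x, X x -> dot n u x <= B) -> dot n u z <= B.
Proof.
  intros Hz HB. destruct (dot_in_conv n X u z Hz) as [m [w [p [H1 [S1 ->]]]]].
  replace B with (rsum m (fun j => w j * B)) by (rewrite (rsum_ext m _ (fun j => B * w j)),
    rsum_scal, S1 by (intros; ring); ring).
  apply rsum_le. intros j Hj. destruct (H1 j Hj). apply Rmult_le_compat_l; auto.
Qed.

Lemma dot_in_conv_ge n (X : vec -> Prop) u z B :
  in_conv n X z -> (forall x, X x -> B <= dot n u x) -> B <= dot n u z.
Proof.
  intros Hz HB. destruct (dot_in_conv n X u z Hz) as [m [w [p [H1 [S1 ->]]]]].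
  replace B with (rsum m (fun j => w j * B)) by (rewrite (rsum_ext m _ (fun j => B * w j)),
    rsum_scal, S1 by (intros; ring); ring).
  apply rsum_le. intros j Hj. destruct (H1 j Hj). apply Rmult_le_compat_l; auto.
Qed.

Lemma Rabs_le_bounds x a : Rabs x <= a -> - a <= x <= a.
Proof. unfold Rabs. destruct (Rcase_abs x); lra. Qed.

Lemma pos_lower_bound N (eps : nat -> R) : (forall i, (i < N)%nat -> 0 < eps i) ->
  exists e0, 0 < e0 /\ forall i, (i < N)%nat -> e0 <= eps i.
Proof.
  induction N as [|N IH]; intros H.
  - exists 1. split; [lra|]. intros; lia.
  - destruct IH as [e0 [He0 H0]]; [intros; apply H; lia|].
    exists (Rmin e0 (eps N)). split; [apply Rmin_glb_lt; auto|].
    intros i Hi. destruct (Nat.eq_dec i N) as [->|Hne]; [apply Rmin_r|].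
    eapply Rle_trans; [apply Rmin_l|]. apply H0. lia.
Qed.

(** * Lagrange multipliers *)

Definition upd (u : vec) (k : nat) (e : R) : vec := fun s => u s + e * kdelta s k.

Lemma convex_slope_le lam mu a1 a2 : mu < 0 -> 0 < lam ->
  0 <= (- mu / (lam - mu)) * a1 + (1 - (- mu / (lam - mu))) * a2 -> a2 / mu <= a1 / lam.
Proof.
  intros Hmu Hlam H.
  replace ((- mu / (lam - mu)) * a1 + (1 - (- mu / (lam - mu))) * a2)
    with ((- mu * a1 + lam * a2) / (lam - mu)) in H by (field; lra).
  assert (H2 : 0 <= - mu * a1 + lam * a2).
  { apply Rmult_le_reg_r with (/ (lam - mu)); [apply Rinv_0_lt_compat; lra|lra]. }
  assert (0 <= (- mu * a1 + lam * a2) / (lam * (- mu))).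
  { apply Rmult_le_pos; [exact H2|]. left. apply Rinv_0_lt_compat. nra. }
  replace (a1 / lam) with (a2 / mu + (- mu * a1 + lam * a2) / (lam * (- mu))) by (field; lra).
  lra.
Qed.

Section PerturbationSupport.

Variable m : nat.
Variable P : vec -> R -> Prop.
Variables (u0 : vec) (f0 : R).

Hypothesis P_convex : forall u1 u2 a1 a2 th, 0 <= th <= 1 -> P u1 a1 -> P u2 a2 ->
  P (fun s => th * u1 s + (1 - th) * u2 s) (th * a1 + (1 - th) * a2).
Hypothesis P_ext : forall u u' a, (forall s, (s < m)%nat -> u s = u' s) -> P u a -> P u' a.
Hypothesis P_lower : forall a, P u0 a -> f0 <= a.
Hypothesis P_interior : forall k, (k < m)%nat -> exists e, 0 < e /\
  (exists a, P (upd u0 k e) a) /\ (exists a, P (upd u0 k (- e)) a).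

Let P_ext_all u u' a : (forall s, u s = u' s) -> P u a -> P u' a.
Proof. intros H. apply P_ext. intros s _. apply H. Qed.

Definition supports_on (k : nat) (g : vec) : Prop :=
  forall d a, (forall s, (k <= s)%nat -> d s = 0) -> P (fun s => u0 s + d s) a ->
    f0 + rsum k (fun s => g s * d s) <= a.

Lemma supports_on_0 : supports_on 0 (fun _ => 0).
Proof.
  intros d a Hd HP. simpl. rewrite Rplus_0_r. apply P_lower.
  eapply P_ext_all; [|exact HP]. intros s. cbv beta. rewrite Hd by lia. lra.
Qed.

Definition perturbation_slope k g (d : vec) (a mu : R) : R :=
  (a - f0 - rsum k (fun s => g s * d s)) / mu.

Definition admissible_at k (d : vec) (a mu : R) : Prop :=
  (forall s, (k <= s)%nat -> d s = 0) /\ P (fun s => u0 s + d s + mu * kdelta s k) a.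

Lemma perturbation_slope_le k g d1 d2 a1 a2 lam mu : supports_on k g ->
  admissible_at k d1 a1 lam -> admissible_at k d2 a2 mu -> mu < 0 -> 0 < lam ->
  perturbation_slope k g d2 a2 mu <= perturbation_slope k g d1 a1 lam.
Proof.
  intros Hg [Hd1 HP1] [Hd2 HP2] Hmu Hlam. unfold perturbation_slope.
  set (th := - mu / (lam - mu)).
  assert (Hth : 0 <= th <= 1).
  { unfold th. split.
    - apply Rmult_le_pos; [lra|left; apply Rinv_0_lt_compat; lra].
    - apply Rmult_le_reg_r with (lam - mu); [lra|].
      unfold Rdiv. rewrite Rmult_assoc, Rinv_l by lra. lra. }
  set (dc := fun s => th * d1 s + (1 - th) * d2 s).
  (* th is chosen so that the k-th coordinates lam and mu cancel *)
  assert (HPc : P (fun s => u0 s + dc s) (th * a1 + (1 - th) * a2)).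
  { eapply P_ext_all; [|exact (P_convex _ _ _ _ th Hth HP1 HP2)].
    intros s. unfold dc, kdelta. destruct (Nat.eqb s k).
    - assert (th * lam + (1 - th) * mu = 0) by (unfold th; field; lra). nra.
    - ring. }
  assert (Hc := Hg dc _ (fun s Hs => ltac:(unfold dc; rewrite Hd1, Hd2 by exact Hs; ring)) HPc).
  replace (rsum k (fun s => g s * dc s))
    with (th * rsum k (fun s => g s * d1 s) + (1 - th) * rsum k (fun s => g s * d2 s)) in Hc
    by (rewrite <- !rsum_scal, <- rsum_plus; apply rsum_ext; intros; unfold dc; ring).
  apply convex_slope_le; [exact Hmu|exact Hlam|]. fold th. lra.
Qed.

Lemma perturbation_slope_separation k g : (k < m)%nat -> supports_on k g ->
  exists gam, forall d a mu, admissible_at k d a mu ->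
    (mu < 0 -> perturbation_slope k g d a mu <= gam) /\ (0 < mu -> gam <= perturbation_slope k g d a mu).
Proof.
  intros Hk Hg.
  set (Lo := fun x => exists d a mu, admissible_at k d a mu /\ mu < 0 /\ x = perturbation_slope k g d a mu).
  destruct (P_interior k Hk) as [e [He [[ap HPp] [am HPm]]]].
  assert (Hup : admissible_at k (fun _ => 0) ap e).
  { split; [reflexivity|]. eapply P_ext_all; [|exact HPp]. intros s. unfold upd. lra. }
  assert (Hlo : admissible_at k (fun _ => 0) am (- e)).
  { split; [reflexivity|]. eapply P_ext_all; [|exact HPm]. intros s. unfold upd. lra. }
  destruct (completeness Lo) as [gam [Hub Hlub]].
  { exists (perturbation_slope k g (fun _ => 0) ap e). intros x [d [a [mu [Had [Hmu ->]]]]].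
    apply (perturbation_slope_le k g); assumption. }
  { exists (perturbation_slope k g (fun _ => 0) am (- e)), (fun _ => 0), am, (- e). auto with real. }
  exists gam. intros d a mu Had. split; intros Hmu.
  - apply Hub. exists d, a, mu. auto.
  - apply Hlub. intros x [d' [a' [mu' [Had' [Hmu' ->]]]]].
    apply (perturbation_slope_le k g); assumption.
Qed.

Lemma supports_on_succ k g : (k < m)%nat -> supports_on k g -> exists g', supports_on (S k) g'.
Proof.
  intros Hk Hg. destruct (perturbation_slope_separation k g Hk Hg) as [gam Hgam].
  exists (fun s => if Nat.eqb s k then gam else g s).
  intros d a Hd HP. simpl. rewrite Nat.eqb_refl.
  set (d' := fun s => if Nat.eqb s k then 0 else d s).
  replace (rsum k (fun s => (if Nat.eqb s k then gam else g s) * d s))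
    with (rsum k (fun s => g s * d' s))
    by (apply rsum_ext; intros s Hs; unfold d'; destruct (Nat.eqb_spec s k); [lia|reflexivity]).
  assert (Had : admissible_at k d' a (d k)).
  { split.
    - intros s Hs. unfold d'. destruct (Nat.eqb_spec s k); [reflexivity|]. apply Hd. lia.
    - eapply P_ext_all; [|exact HP]. intros s. unfold d', kdelta.
      destruct (Nat.eqb_spec s k); subst; lra. }
  destruct (Hgam d' a (d k) Had) as [Hneg Hpos]. unfold perturbation_slope in *.
  destruct (Rtotal_order (d k) 0) as [Hlt|[Hzero|Hgt]].
  - specialize (Hneg Hlt).
    assert (gam * d k <= (a - f0 - rsum k (fun s => g s * d' s)) / d k * d k) by nra.
    unfold Rdiv in *. rewrite Rmult_assoc, Rinv_l in * by lra. lra.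
  - rewrite Hzero, Rmult_0_r, Rplus_0_r. apply Hg; [apply Had|].
    eapply P_ext_all; [|exact (proj2 Had)]. intros s. rewrite Hzero. lra.
  - specialize (Hpos Hgt).
    assert (gam * d k <= (a - f0 - rsum k (fun s => g s * d' s)) / d k * d k) by nra.
    unfold Rdiv in *. rewrite Rmult_assoc, Rinv_l in * by lra. lra.
Qed.

Theorem perturbation_support :
  exists g : vec, forall d a, P (fun s => u0 s + d s) a -> f0 + rsum m (fun s => g s * d s) <= a.
Proof.
  assert (Hall : forall k, (k <= m)%nat -> exists g, supports_on k g).
  { induction k as [|k IH]; intros Hk.
    - exists (fun _ => 0). exact supports_on_0.
    - destruct (IH ltac:(lia)) as [g Hg]. exact (supports_on_succ k g ltac:(lia) Hg). }
  destruct (Hall m (le_n m)) as [g Hg]. exists g. intros d a HP.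
  set (d' := fun s => if Nat.ltb s m then d s else 0).
  replace (rsum m (fun s => g s * d s)) with (rsum m (fun s => g s * d' s))
    by (apply rsum_ext; intros s Hs; unfold d'; destruct (Nat.ltb_spec s m); [reflexivity|lia]).
  apply Hg.
  - intros s Hs. unfold d'. destruct (Nat.ltb_spec s m); [lia|reflexivity].
  - eapply P_ext; [|exact HP]. intros s Hs. unfold d'. destruct (Nat.ltb_spec s m); [reflexivity|lia].
Qed.

End PerturbationSupport.

Theorem lagrange_multiplier m (P : vec -> R -> Prop) (u0 : vec) (f0 : R) :
  (forall u1 u2 a1 a2 th, 0 <= th <= 1 -> P u1 a1 -> P u2 a2 ->
     P (fun s => th * u1 s + (1 - th) * u2 s) (th * a1 + (1 - th) * a2)) ->
  (forall u u' a, (forall s, (s < m)%nat -> u s <= u' s) -> P u a -> P u' a) ->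
  P u0 f0 -> (forall a, P u0 a -> f0 <= a) ->
  (exists u a zeta, 0 < zeta /\ P u a /\ forall s, (s < m)%nat -> zeta <= u0 s - u s) ->
  exists pi : vec, (forall s, (s < m)%nat -> 0 <= pi s) /\
    forall u a, P u a -> f0 <= a + rsum m (fun s => pi s * (u s - u0 s)).
Proof.
  intros Pconv Pmono Pf0 Plow [uh [ah [zeta [Hzeta [Puh Huh]]]]].
  assert (Pext : forall u u' a, (forall s, (s < m)%nat -> u s = u' s) -> P u a -> P u' a).
  { intros u u' a H. apply Pmono. intros s Hs. rewrite H by exact Hs. lra. }
  destruct (perturbation_support m P u0 f0 Pconv Pext Plow) as [g Hg].
  { intros k Hk. exists zeta. split; [exact Hzeta|split].
    - exists f0. eapply Pmono; [|exact Pf0]. intros s _. unfold upd, kdelta.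
      destruct (Nat.eqb s k); lra.
    - exists ah. eapply Pmono; [|exact Puh]. intros s Hs. specialize (Huh s Hs). unfold upd, kdelta.
      destruct (Nat.eqb s k); lra. }
  exists (fun s => - g s). split.
  - intros s Hs.
    assert (H : f0 + rsum m (fun s' => g s' * kdelta s' s) <= f0).
    { apply Hg. eapply Pmono; [|exact Pf0]. intros s' _. unfold kdelta.
      destruct (Nat.eqb s' s); lra. }
    rewrite rsum_kdelta in H by exact Hs. lra.
  - intros u a Hu.
    assert (H := Hg (fun s => u s - u0 s) a ltac:(eapply Pext; [|exact Hu]; intros; cbv beta; ring)).
    rewrite (rsum_ext m _ (fun s => - (g s * (u s - u0 s)))), rsum_opp by (intros; ring).
    lra.
Qed.

Lemma p1_dual_ge_cost n S c A (X : vec -> Prop) M y z v mu :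
  p1_pd_opt n S c A X y M z v mu -> p1_dual_ge n S c A X y M mu (p1_cost n c M z v).
Proof.
  intros [[Hf Hopt] [_ Hdual]].
  set (P := fun u a => exists z' v', p1_feas n S A X u z' v' /\ a = p1_cost n c M z' v').
  destruct (lagrange_multiplier S P y (p1_cost n c M z v)) as [pi [Hpi Hlagr]].
  - intros u1 u2 a1 a2 th Hth [z1 [v1 [[C1 [V1 F1]] ->]]] [z2 [v2 [[C2 [V2 F2]] ->]]].
    exists (fun k => th * z1 k + (1 - th) * z2 k), (th * v1 + (1 - th) * v2).
    split; [split; [|split]|].
    + apply in_conv_comb; assumption.
    + nra.
    + intros s Hs. rewrite dot_lin. specialize (F1 s Hs). specialize (F2 s Hs). nra.
    + unfold p1_cost. rewrite dot_lin. ring.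
  - intros u u' a Hu [z' [v' [[C1 [V1 F1]] ->]]]. exists z', v'.
    split; [split; [exact C1|split; [exact V1|]]|reflexivity].
    intros s Hs. specialize (F1 s Hs). specialize (Hu s Hs). lra.
  - exists z, v. split; [exact Hf|reflexivity].
  - intros a [z' [v' [Hf' ->]]]. apply Hopt. exact Hf'.
  - (* raising the penalty variable by 1 gives a Slater point for (P1) *)
    destruct Hf as [C1 [V1 F1]].
    exists (fun s => y s - 1), (p1_cost n c M z (v + 1)), 1. split; [lra|split; [|intros; lra]].
    exists z, (v + 1). split; [split; [exact C1|split; [lra|]]|reflexivity].
    intros s Hs. specialize (F1 s Hs). lra.
  - apply Hdual with pi; [exact Hpi|]. intros z' v' Hz' Hv'. unfold p1_lagr.
    assert (H := Hlagr (fun s => dot n (A s) z' - v') (p1_cost n c M z' v')).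
    rewrite (rsum_ext S (fun s => pi s * (dot n (A s) z' - y s - v'))
      (fun s => pi s * (dot n (A s) z' - v' - y s))) by (intros; ring).
    apply H. exists z', v'. split; [split; [exact Hz'|split; [exact Hv'|intros; lra]]|reflexivity].
Qed.

Lemma p1_dual_ge_mult_le n S c A (X : vec -> Prop) y M mu a z0 :
  p1_dual_ge n S c A X y M mu a -> in_conv n X z0 -> rsum S mu <= M.
Proof.
  intros H Hz. destruct (Rle_or_lt (rsum S mu) M) as [|Hlt]; [assumption|exfalso].
  set (K0 := dot n c z0 + rsum S (fun s => mu s * (dot n (A s) z0 - y s))).
  (* the dual function at mu tends to -oo along z0 as the penalty variable grows *)
  set (V := (Rabs (K0 - a) + 1) / (rsum S mu - M)).
  assert (HV : 0 < V).
  { unfold V. apply Rdiv_lt_0_compat; [pose proof (Rabs_pos (K0 - a))|]; lra. }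
  specialize (H z0 V Hz ltac:(lra)). unfold p1_lagr, p1_cost in H.
  replace (rsum S (fun s => mu s * (dot n (A s) z0 - y s - V)))
    with (rsum S (fun s => mu s * (dot n (A s) z0 - y s)) - V * rsum S mu) in H
    by (rewrite <- rsum_scal, <- rsum_minus; apply rsum_ext; intros; ring).
  assert (V * (rsum S mu - M) = Rabs (K0 - a) + 1) by (unfold V; field; lra).
  pose proof (Rle_abs (K0 - a)). unfold K0 in *. nra.
Qed.

Lemma p1_dual_ge_subgrad n S c A (X : vec -> Prop) y M mu a :
  p1_dual_ge n S c A X y M mu a -> (forall s, (s < S)%nat -> 0 <= mu s) ->
  forall y' z' v', p1_feas n S A X y' z' v' ->
    a <= p1_cost n c M z' v' + rsum S (fun s => mu s * (y' s - y s)).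
Proof.
  intros H Hmu y' z' v' [Hc [Hv Hf]]. specialize (H z' v' Hc Hv). unfold p1_lagr in H.
  replace (rsum S (fun s => mu s * (dot n (A s) z' - y s - v')))
    with (rsum S (fun s => mu s * (dot n (A s) z' - y' s - v')) + rsum S (fun s => mu s * (y' s - y s)))
    in H by (rewrite <- rsum_plus; apply rsum_ext; intros; ring).
  assert (rsum S (fun s => mu s * (dot n (A s) z' - y' s - v')) <= 0).
  { rewrite <- (Rmult_0_r (INR S)). apply rsum_le_const. intros s Hs.
    specialize (Hmu s Hs). specialize (Hf s Hs). nra. }
  lra.
Qed.

Lemma lp_multiplier N S (n : nat -> nat) (X : nat -> vec -> Prop) (c : nat -> vec)
  (A : nat -> nat -> vec) (u0 : vec) (zs zhat : nat -> vec) (zeta : R) :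
  (forall i, (i < N)%nat -> in_conv (n i) (X i) (zs i)) ->
  (forall s, (s < S)%nat -> rsum N (fun i => dot (n i) (A i s) (zs i)) <= u0 s) ->
  (forall z : nat -> vec, (forall i, (i < N)%nat -> in_conv (n i) (X i) (z i)) ->
     (forall s, (s < S)%nat -> rsum N (fun i => dot (n i) (A i s) (z i)) <= u0 s) ->
     rsum N (fun i => dot (n i) (c i) (zs i)) <= rsum N (fun i => dot (n i) (c i) (z i))) ->
  (forall i, (i < N)%nat -> in_conv (n i) (X i) (zhat i)) -> 0 < zeta ->
  (forall s, (s < S)%nat -> zeta <= u0 s - rsum N (fun i => dot (n i) (A i s) (zhat i))) ->
  exists pi : vec, (forall s, (s < S)%nat -> 0 <= pi s) /\
    forall z : nat -> vec, (forall i, (i < N)%nat -> in_conv (n i) (X i) (z i)) ->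
      rsum N (fun i => dot (n i) (c i) (zs i)) <= rsum N (fun i => dot (n i) (c i) (z i)) +
        rsum S (fun s => pi s * (rsum N (fun i => dot (n i) (A i s) (z i)) - u0 s)).
Proof.
  intros Hzs Hzsf Hopt Hzh Hze Hzeta.
  set (P := fun (u : vec) a => exists z : nat -> vec,
    (forall i, (i < N)%nat -> in_conv (n i) (X i) (z i)) /\
    (forall s, (s < S)%nat -> rsum N (fun i => dot (n i) (A i s) (z i)) <= u s) /\
    a = rsum N (fun i => dot (n i) (c i) (z i))).
  destruct (lagrange_multiplier S P u0 (rsum N (fun i => dot (n i) (c i) (zs i))))
    as [pi [Hpi Hlagr]].
  - intros u1 u2 a1 a2 th Hth [z1 [C1 [F1 ->]]] [z2 [C2 [F2 ->]]].
    assert (Hcomb : forall u : nat -> vec,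
      rsum N (fun i => dot (n i) (u i) (fun k => th * z1 i k + (1 - th) * z2 i k))
      = th * rsum N (fun i => dot (n i) (u i) (z1 i)) + (1 - th) * rsum N (fun i => dot (n i) (u i) (z2 i))).
    { intros u. rewrite <- !rsum_scal, <- rsum_plus. apply rsum_ext. intros. apply dot_lin. }
    exists (fun i k => th * z1 i k + (1 - th) * z2 i k). split; [|split].
    + intros i Hi. apply in_conv_comb; auto.
    + intros s Hs. specialize (F1 s Hs). specialize (F2 s Hs).
      rewrite (Hcomb (fun i => A i s)). nra.
    + symmetry. apply (Hcomb c).
  - intros u u' a Hu [z [C1 [F1 ->]]]. exists z. split; [exact C1|split; [|reflexivity]].
    intros s Hs. specialize (F1 s Hs). specialize (Hu s Hs). lra.
  - exists zs. auto.
  - intros a [z [C1 [F1 ->]]]. apply Hopt; assumption.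
  - exists (fun s => rsum N (fun i => dot (n i) (A i s) (zhat i))),
      (rsum N (fun i => dot (n i) (c i) (zhat i))), zeta.
    split; [exact Hze|split; [exists zhat; repeat split; auto; intros; lra|exact Hzeta]].
  - exists pi. split; [exact Hpi|]. intros z Hz. apply Hlagr. exists z. repeat split; auto. intros; lra.
Qed.

(** * Net flows on a graph *)

Definition net_flow (N : nat) (adj : nat -> nat -> bool) (lam : nat -> nat -> vec) : nat -> vec :=
  fun i s => rsum N (fun j => if adj i j then lam i j s - lam j i s else 0).

Definition edge_diff (adj : nat -> nat -> bool) (mu : nat -> vec) (i j s : nat) : R :=
  if adj i j then mu i s - mu j s else 0.

Lemma net_flow_zero N adj i s : net_flow N adj (fun _ _ _ => 0) i s = 0.
Proof.
  unfold net_flow. rewrite (rsum_ext N _ (fun _ => 0)), rsum_const; [ring|].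
  intros j _. destruct (adj i j); ring.
Qed.

Lemma net_flow_plus N adj l1 l2 i s :
  net_flow N adj (fun a b t => l1 a b t + l2 a b t) i s = net_flow N adj l1 i s + net_flow N adj l2 i s.
Proof. unfold net_flow. rewrite <- rsum_plus. apply rsum_ext. intros j _. destruct (adj i j); ring. Qed.

Lemma net_flow_minus N adj l1 l2 i s :
  net_flow N adj (fun a b t => l1 a b t - l2 a b t) i s = net_flow N adj l1 i s - net_flow N adj l2 i s.
Proof. unfold net_flow. rewrite <- rsum_minus. apply rsum_ext. intros j _. destruct (adj i j); ring. Qed.

Lemma net_flow_abs_le N adj lam i s rho :
  (forall j k, (j < N)%nat -> (k < N)%nat -> Rabs (lam j k s) <= rho) -> (i < N)%nat ->
  Rabs (net_flow N adj lam i s) <= 2 * INR N * rho.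
Proof.
  intros H Hi. unfold net_flow. eapply Rle_trans; [apply rsum_abs|].
  replace (2 * INR N * rho) with (INR N * (2 * rho)) by ring. apply rsum_le_const. intros j Hj.
  pose proof (H i j Hi Hj). pose proof (H j i Hj Hi). pose proof (Rabs_pos (lam i j s)).
  destruct (adj i j).
  - eapply Rle_trans; [apply Rabs_triang|]. rewrite Rabs_Ropp. lra.
  - rewrite Rabs_R0. lra.
Qed.

Lemma net_flow_edge N adj i j (u : vec) : (forall a b, adj a b = adj b a) ->
  (j < N)%nat -> (i < N)%nat -> adj i j = true ->
  exists lam, forall k s, net_flow N adj lam k s = u s * (kdelta k i - kdelta k j).
Proof.
  intros Hsym Hj Hi Hij. assert (Hji : adj j i = true) by (rewrite Hsym; exact Hij).
  exists (fun a b s => u s * (kdelta a i * kdelta b j)). intros k s. unfold net_flow.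
  rewrite (rsum_ext N _ (fun l => u s * kdelta k i * kdelta l j - u s * kdelta k j * kdelta l i)).
  - rewrite rsum_minus, !rsum_kdelta by assumption. ring.
  - intros l _. destruct (adj k l) eqn:E; [ring|]. unfold kdelta.
    destruct (Nat.eqb_spec k i), (Nat.eqb_spec l j), (Nat.eqb_spec k j), (Nat.eqb_spec l i);
      subst; try ring; congruence.
Qed.

Lemma net_flow_path N adj i j : (forall a b, adj a b = adj b a) ->
  clos_refl_trans nat (graph_edge N adj) i j -> forall u : vec,
  exists lam, forall k s, net_flow N adj lam k s = u s * (kdelta k i - kdelta k j).
Proof.
  intros Hsym H. induction H as [a b [Ha [Hb Hab]]|a|a b e _ IH1 _ IH2]; intros u.
  - exact (net_flow_edge N adj a b u Hsym Hb Ha Hab).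
  - exists (fun _ _ _ => 0). intros k s. rewrite net_flow_zero. ring.
  - destruct (IH1 u) as [l1 E1], (IH2 u) as [l2 E2].
    exists (fun a b t => l1 a b t + l2 a b t). intros k s. rewrite net_flow_plus, E1, E2. ring.
Qed.

(* Route each agent's share of a zero-sum vector to agent 0 along a path. *)
Theorem net_flow_of_zero_sum N S adj (w : nat -> vec) : (0 < N)%nat -> connected_undirected N adj ->
  (forall s, (s < S)%nat -> rsum N (fun i => w i s) = 0) ->
  exists lam, forall k s, (k < N)%nat -> (s < S)%nat -> net_flow N adj lam k s = w k s.
Proof.
  intros HN [Hsym [_ Hconn]] Hw.
  assert (Hpart : forall m, (m <= N)%nat -> exists lam, forall k s,
    net_flow N adj lam k s = rsum m (fun i => w i s * (kdelta k i - kdelta k 0))).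
  { induction m as [|m IH]; intros Hm.
    - exists (fun _ _ _ => 0). intros k s. rewrite net_flow_zero. reflexivity.
    - destruct (IH ltac:(lia)) as [l1 E1].
      destruct (net_flow_path N adj m 0 Hsym (Hconn m 0%nat ltac:(lia) HN) (fun s => w m s)) as [l2 E2].
      exists (fun a b t => l1 a b t + l2 a b t). intros k s.
      rewrite net_flow_plus, E1, E2. reflexivity. }
  destruct (Hpart N (le_n N)) as [lam E]. exists lam. intros k s Hk Hs. rewrite E.
  rewrite (rsum_ext N _ (fun i => w i s * kdelta i k - kdelta k 0 * w i s)).
  - rewrite rsum_minus, rsum_scal, Hw, rsum_kdelta by assumption. ring.
  - intros i _. unfold kdelta. rewrite Nat.eqb_sym. ring.
Qed.

Definition sum3 (N S : nat) (F : nat -> nat -> nat -> R) : R :=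
  rsum N (fun i => rsum N (fun j => rsum S (fun s => F i j s))).

Lemma sum3_ext N S F G :
  (forall i j s, (i < N)%nat -> (j < N)%nat -> (s < S)%nat -> F i j s = G i j s) ->
  sum3 N S F = sum3 N S G.
Proof.
  intros H. unfold sum3. apply rsum_ext; intros i Hi. apply rsum_ext; intros j Hj.
  apply rsum_ext; intros s Hs. auto.
Qed.

Lemma sum3_le N S F G :
  (forall i j s, (i < N)%nat -> (j < N)%nat -> (s < S)%nat -> F i j s <= G i j s) ->
  sum3 N S F <= sum3 N S G.
Proof.
  intros H. unfold sum3. apply rsum_le; intros i Hi. apply rsum_le; intros j Hj.
  apply rsum_le; intros s Hs. auto.
Qed.

Lemma sum3_plus N S F G : sum3 N S (fun i j s => F i j s + G i j s) = sum3 N S F + sum3 N S G.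
Proof.
  unfold sum3. rewrite <- rsum_plus. apply rsum_ext; intros i _.
  rewrite <- rsum_plus. apply rsum_ext; intros j _. apply rsum_plus.
Qed.

Lemma sum3_scal N S a F : sum3 N S (fun i j s => a * F i j s) = a * sum3 N S F.
Proof.
  unfold sum3. rewrite <- rsum_scal. apply rsum_ext; intros i _.
  rewrite <- rsum_scal. apply rsum_ext; intros j _. apply rsum_scal.
Qed.

Lemma sum3_const N S a : sum3 N S (fun _ _ _ => a) = INR N * INR N * INR S * a.
Proof.
  unfold sum3. rewrite (rsum_ext N _ (fun _ => INR N * (INR S * a))), rsum_const; [ring|].
  intros i _. rewrite (rsum_ext N _ (fun _ => INR S * a)), rsum_const; [reflexivity|].
  intros; apply rsum_const.
Qed.

Lemma sum3_nonneg N S F :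
  (forall i j s, (i < N)%nat -> (j < N)%nat -> (s < S)%nat -> 0 <= F i j s) -> 0 <= sum3 N S F.
Proof.
  intros H. unfold sum3. apply rsum_nonneg; intros i Hi. apply rsum_nonneg; intros j Hj.
  apply rsum_nonneg; intros s Hs. auto.
Qed.

Lemma sum3_term_le N S F i j s :
  (forall i j s, (i < N)%nat -> (j < N)%nat -> (s < S)%nat -> 0 <= F i j s) ->
  (i < N)%nat -> (j < N)%nat -> (s < S)%nat -> F i j s <= sum3 N S F.
Proof.
  intros H Hi Hj Hs. unfold sum3.
  eapply Rle_trans; [|apply (rsum_term_le N _ i); [intros; apply rsum_nonneg; intros;
    apply rsum_nonneg; auto|exact Hi]].
  eapply Rle_trans; [|apply (rsum_term_le N _ j); [intros; apply rsum_nonneg; auto|exact Hj]].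
  apply (rsum_term_le S (fun s => F i j s) s); auto.
Qed.

Lemma sum3_sq_expand N S F G a : sum3 N S (fun i j s => (F i j s + a * G i j s) ^ 2) =
  sum3 N S (fun i j s => F i j s ^ 2) + 2 * a * sum3 N S (fun i j s => F i j s * G i j s)
  + a ^ 2 * sum3 N S (fun i j s => G i j s ^ 2).
Proof.
  rewrite <- (sum3_scal N S (2 * a)), <- (sum3_scal N S (a ^ 2)), <- !sum3_plus.
  apply sum3_ext. intros; ring.
Qed.

(* Summation by parts: edge_diff is the transpose of net_flow. *)
Lemma sum3_edge_diff N S adj (mu : nat -> vec) (lam : nat -> nat -> vec) :
  (forall a b, adj a b = adj b a) ->
  sum3 N S (fun i j s => lam i j s * edge_diff adj mu i j s) =
  rsum N (fun i => rsum S (fun s => mu i s * net_flow N adj lam i s)).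
Proof.
  intros Hsym.
  set (out := fun i j s => if adj i j then lam i j s * mu i s else 0).
  set (inc := fun i j s => if adj i j then lam j i s * mu i s else 0).
  transitivity (sum3 N S out - sum3 N S inc).
  - replace (sum3 N S inc) with (sum3 N S (fun i j s => if adj i j then lam i j s * mu j s else 0)).
    + unfold sum3. rewrite <- rsum_minus. apply rsum_ext; intros i _.
      rewrite <- rsum_minus. apply rsum_ext; intros j _.
      rewrite <- rsum_minus. apply rsum_ext; intros s _.
      unfold out, edge_diff. destruct (adj i j); ring.
    + unfold sum3. rewrite (rsum_swap N N (fun i j => rsum S (fun s => inc i j s))).
      apply rsum_ext; intros i _. apply rsum_ext; intros j _.
      apply rsum_ext; intros s _. unfold inc. rewrite Hsym. reflexivity.
  - unfold sum3. rewrite <- rsum_minus. apply rsum_ext; intros i _.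
    rewrite <- rsum_minus.
    rewrite (rsum_ext N _ (fun j => rsum S (fun s => out i j s - inc i j s)))
      by (intros; symmetry; apply rsum_minus).
    rewrite (rsum_swap N S (fun j s => out i j s - inc i j s)). apply rsum_ext; intros s _.
    unfold net_flow. rewrite <- rsum_scal. apply rsum_ext; intros j _.
    unfold out, inc. destruct (adj i j); ring.
Qed.

Lemma net_flow_edge_diff N adj (mu : nat -> vec) a i s : (forall a b, adj a b = adj b a) ->
  net_flow N adj (fun i j s => a * edge_diff adj mu i j s) i s
  = 2 * a * rsum N (fun j => edge_diff adj mu i j s).
Proof.
  intros Hsym. unfold net_flow. rewrite <- rsum_scal. apply rsum_ext. intros j _.
  unfold edge_diff. rewrite (Hsym j i). destruct (adj i j); ring.
Qed.

Fixpoint edge_state (alpha : nat -> R) (adj : nat -> nat -> bool) (mu : nat -> nat -> vec) (t : nat)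
  : nat -> nat -> vec :=
  match t with
  | O => fun _ _ _ => 0
  | S t' => fun i j s => edge_state alpha adj mu t' i j s + alpha t' / 2 * edge_diff adj (mu t') i j s
  end.

Lemma edge_state_succ alpha adj mu t i j s :
  edge_state alpha adj mu (t + 1) i j s
  = edge_state alpha adj mu t i j s + alpha t / 2 * edge_diff adj (mu t) i j s.
Proof. rewrite Nat.add_1_r. reflexivity. Qed.

Lemma net_flow_edge_state_succ N adj alpha mu t i s : (forall a b, adj a b = adj b a) ->
  net_flow N adj (edge_state alpha adj mu (t + 1)) i s
  = net_flow N adj (edge_state alpha adj mu t) i s + alpha t * rsum N (fun j => edge_diff adj (mu t) i j s).
Proof.
  intros Hsym. rewrite Nat.add_1_r. cbn [edge_state].
  rewrite (net_flow_plus N adj (edge_state alpha adj mu t)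
    (fun a b u => alpha t / 2 * edge_diff adj (mu t) a b u)).
  rewrite net_flow_edge_diff by exact Hsym. field.
Qed.

(** * Fejer sequences *)

Lemma inv_INR_succ_pos k : 0 < / (INR k + 1).
Proof. apply Rinv_0_lt_compat. pose proof (pos_INR k). lra. Qed.

Lemma inv_INR_succ_le k k' : (k <= k')%nat -> / (INR k' + 1) <= / (INR k + 1).
Proof.
  intros H. apply Rinv_le_contravar; [pose proof (pos_INR k); lra|].
  apply le_INR in H. lra.
Qed.

Lemma inv_INR_succ_lt eps : 0 < eps -> exists K : nat, / (INR K + 1) < eps.
Proof.
  intros H. destruct (archimed_cor1 eps H) as [K [H1 H2]]. exists K.
  eapply Rle_lt_trans; [|exact H1]. apply Rinv_le_contravar; [apply lt_0_INR; lia|lra].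
Qed.

Lemma rsum_sq_le_lim (al : nat -> R) l :
  Un_cv (fun T => rsum T (fun t => al t ^ 2)) l -> forall n, rsum n (fun t => al t ^ 2) <= l.
Proof.
  intros H n. apply (growing_ineq (fun T => rsum T (fun t => al t ^ 2)) l); [|exact H].
  intros k. simpl. pose proof (pow2_ge_0 (al k)). lra.
Qed.

Lemma rsum_sq_tail_lt (al : nat -> R) l : Un_cv (fun T => rsum T (fun t => al t ^ 2)) l ->
  forall eps, 0 < eps -> exists T, forall t k, (T <= t)%nat -> rsum k (fun j => al (t + j)%nat ^ 2) < eps.
Proof.
  intros H eps He. destruct (H (eps / 2) ltac:(lra)) as [T HT]. exists T. intros t k Ht.
  pose proof (HT t Ht) as A. pose proof (HT (t + k)%nat ltac:(lia)) as B. unfold R_dist in A, B.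
  rewrite rsum_app in B. apply Rabs_def2 in A. apply Rabs_def2 in B. lra.
Qed.

Section FejerSequences.

Variables (D gap alpha : nat -> R) (C l : R).
Hypothesis D_nonneg : forall t, 0 <= D t.
Hypothesis gap_nonneg : forall t, 0 <= gap t.
Hypothesis alpha_nonneg : forall t, 0 <= alpha t.
Hypothesis C_nonneg : 0 <= C.
Hypothesis alpha_sq_cv : Un_cv (fun T => rsum T (fun t => alpha t ^ 2)) l.
Hypothesis D_fejer : forall t, D (t + 1)%nat <= D t - alpha t * gap t + alpha t ^ 2 * C.

Lemma fejer_iter t k : D (t + k)%nat <= D t - rsum k (fun j => alpha (t + j)%nat * gap (t + j)%nat)
  + C * rsum k (fun j => alpha (t + j)%nat ^ 2).
Proof.
  induction k; cbn [rsum].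
  - rewrite Nat.add_0_r. lra.
  - rewrite Nat.add_succ_r, <- Nat.add_1_r. specialize (D_fejer (t + k)%nat). lra.
Qed.

Lemma fejer_tail_le t k : D (t + k)%nat <= D t + C * rsum k (fun j => alpha (t + j)%nat ^ 2).
Proof.
  pose proof (fejer_iter t k).
  assert (0 <= rsum k (fun j => alpha (t + j)%nat * gap (t + j)%nat))
    by (apply rsum_nonneg; intros; apply Rmult_le_pos; auto).
  lra.
Qed.

Lemma fejer_bounded t : D t <= D O + C * l.
Proof.
  pose proof (fejer_tail_le O t) as H. cbn [Nat.add] in H.
  assert (C * rsum t (fun j => alpha j ^ 2) <= C * l)
    by (apply Rmult_le_compat_l; [exact C_nonneg|apply rsum_sq_le_lim; exact alpha_sq_cv]).
  lra.
Qed.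

(* Otherwise sum alpha_t * gap_t would diverge while staying below D 0 + C l. *)
Lemma fejer_gap_small : cv_infty (fun T => rsum T alpha) ->
  forall eps, 0 < eps -> forall T0, exists t, (T0 <= t)%nat /\ gap t < eps.
Proof.
  intros Hinf eps Heps T0. apply NNPP. intros Hno.
  assert (Hge : forall t, (T0 <= t)%nat -> eps <= gap t).
  { intros t Ht. destruct (Rle_or_lt eps (gap t)) as [|Hlt]; [assumption|].
    exfalso. apply Hno. exists t. auto. }
  destruct (Hinf (rsum T0 alpha + (D T0 + C * l) / eps + 1)) as [K HK].
  set (k := (Nat.max K T0 - T0)%nat).
  specialize (HK (T0 + k)%nat ltac:(unfold k; lia)).
  rewrite rsum_app in HK.
  assert (B2 : rsum k (fun j => alpha (T0 + j)%nat ^ 2) <= l).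
  { pose proof (rsum_sq_le_lim alpha l alpha_sq_cv (T0 + k)%nat) as H. rewrite rsum_app in H.
    assert (0 <= rsum T0 (fun t => alpha t ^ 2)) by (apply rsum_nonneg; intros; apply pow2_ge_0).
    lra. }
  assert (B1 : eps * rsum k (fun j => alpha (T0 + j)%nat)
               <= rsum k (fun j => alpha (T0 + j)%nat * gap (T0 + j)%nat)).
  { rewrite <- rsum_scal. apply rsum_le. intros j _.
    specialize (Hge (T0 + j)%nat ltac:(lia)). specialize (alpha_nonneg (T0 + j)%nat). nra. }
  pose proof (fejer_iter T0 k). pose proof (D_nonneg (T0 + k)%nat).
  assert (eps * rsum k (fun j => alpha (T0 + j)%nat) <= D T0 + C * l) by nra.
  assert (rsum k (fun j => alpha (T0 + j)%nat) <= (D T0 + C * l) / eps).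
  { assert (eps * ((D T0 + C * l) / eps) = D T0 + C * l) by (field; lra).
    apply Rmult_le_reg_l with eps; lra. }
  lra.
Qed.

End FejerSequences.

Lemma bolzano_weierstrass_seq (u : nat -> R) B : (forall n, Rabs (u n) <= B) ->
  exists l (psi : nat -> nat), (forall k, (k <= psi k)%nat) /\
    forall eps, 0 < eps -> exists K, forall k, (K <= k)%nat -> Rabs (u (psi k) - l) < eps.
Proof.
  intros HB.
  assert (Hin : forall n, -B <= u n <= B) by (intros n; specialize (HB n); apply Rabs_le_bounds in HB; exact HB).
  destruct (Bolzano_Weierstrass u (fun x => -B <= x <= B) (compact_P3 (-B) B) Hin) as [l Hl].
  assert (Ex : forall k, exists p, (k <= p)%nat /\ Rabs (u p - l) < / (INR k + 1)).
  { intros k. destruct (Hl (disc l (mkposreal _ (inv_INR_succ_pos k))) k) as [p [Hp Hv]].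
    - exists (mkposreal _ (inv_INR_succ_pos k)). intros x Hx. exact Hx.
    - exists p. split; [exact Hp|exact Hv]. }
  exists l, (fun k => proj1_sig (constructive_indefinite_description _ (Ex k))). split.
  - intros k. destruct (constructive_indefinite_description _ (Ex k)) as [p [H1 H2]]. exact H1.
  - intros eps He. destruct (inv_INR_succ_lt eps He) as [K HK]. exists K. intros k Hk.
    destruct (constructive_indefinite_description _ (Ex k)) as [p [H1 H2]]. simpl.
    pose proof (inv_INR_succ_le K k Hk). lra.
Qed.

Lemma bolzano_weierstrass_list {I : Type} (dec : forall x y : I, {x = y} + {x <> y})
  (L : list I) (u : nat -> I -> R) (B : I -> R) :
  (forall n x, In x L -> Rabs (u n x) <= B x) ->
  exists (phi : nat -> nat) (l : I -> R), (forall k, (k <= phi k)%nat) /\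
    forall x, In x L -> forall eps, 0 < eps ->
      exists K, forall k, (K <= k)%nat -> Rabs (u (phi k) x - l x) < eps.
Proof.
  induction L as [|x0 L IH]; intros HB.
  - exists (fun k => k), (fun _ => 0). split; [auto|]. intros x [].
  - destruct IH as [phi [l [Hphi Hc]]]; [intros n x Hx; apply HB; right; exact Hx|].
    destruct (bolzano_weierstrass_seq (fun k => u (phi k) x0) (B x0)) as [l0 [psi [Hpsi Hc0]]].
    { intros n. apply HB. left. reflexivity. }
    exists (fun k => phi (psi k)), (fun y => if dec y x0 then l0 else l y). split.
    + intros k. specialize (Hphi (psi k)). specialize (Hpsi k). lia.
    + intros x Hx eps He. destruct (dec x x0) as [->|Hne].
      * exact (Hc0 eps He).
      * destruct Hx as [Hx|Hx]; [congruence|]. destruct (Hc x Hx eps He) as [K HK].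
        exists K. intros k Hk. apply HK. specialize (Hpsi k). lia.
Qed.

Lemma cv_list_uniform {I : Type} (L : list I) (f : nat -> I -> R) (l : I -> R) :
  (forall x, In x L -> forall eps, 0 < eps ->
     exists K, forall k, (K <= k)%nat -> Rabs (f k x - l x) < eps) ->
  forall eps, 0 < eps -> exists K, forall k, (K <= k)%nat -> forall x, In x L -> Rabs (f k x - l x) < eps.
Proof.
  induction L as [|x0 L IH]; intros H eps He.
  - exists O. intros k _ x [].
  - destruct (H x0 (or_introl eq_refl) eps He) as [K0 HK0].
    destruct (IH (fun x Hx => H x (or_intror Hx)) eps He) as [K1 HK1].
    exists (Nat.max K0 K1). intros k Hk x [<-|Hx].
    + apply HK0. lia.
    + apply HK1; [lia|exact Hx].
Qed.

Definition triples (N S : nat) : list (nat * nat * nat) :=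
  flat_map (fun i => flat_map (fun j => map (fun s => (i, j, s)) (seq 0 S)) (seq 0 N)) (seq 0 N).

Lemma in_triples N S i j s : In (i, j, s) (triples N S) <-> (i < N)%nat /\ (j < N)%nat /\ (s < S)%nat.
Proof.
  unfold triples. rewrite in_flat_map. split.
  - intros [i' [Hi' Hq]]. apply in_flat_map in Hq as [j' [Hj' Hq]].
    apply in_map_iff in Hq as [s' [Eq Hs']]. injection Eq as -> -> ->.
    apply in_seq in Hi', Hj', Hs'. lia.
  - intros (Hi & Hj & Hs). exists i. split; [apply in_seq; lia|].
    apply in_flat_map. exists j. split; [apply in_seq; lia|].
    apply in_map. apply in_seq. lia.
Qed.

Lemma triple_eq_dec : forall x y : nat * nat * nat, {x = y} + {x <> y}.
Proof. repeat decide equality. Qed.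

Definition dist2 (N S : nat) (l1 l2 : nat -> nat -> vec) : R :=
  sum3 N S (fun i j s => (l1 i j s - l2 i j s) ^ 2).

Definition coord_close (N S : nat) (l1 l2 : nat -> nat -> vec) (r : R) : Prop :=
  forall i j s, (i < N)%nat -> (j < N)%nat -> (s < S)%nat -> Rabs (l1 i j s - l2 i j s) < r.

Lemma dist2_nonneg N S l1 l2 : 0 <= dist2 N S l1 l2.
Proof. apply sum3_nonneg. intros. apply pow2_ge_0. Qed.

Lemma dist2_term_le N S l1 l2 i j s : (i < N)%nat -> (j < N)%nat -> (s < S)%nat ->
  (l1 i j s - l2 i j s) ^ 2 <= dist2 N S l1 l2.
Proof. intros. apply (sum3_term_le N S (fun i j s => (l1 i j s - l2 i j s) ^ 2)); auto. intros; apply pow2_ge_0. Qed.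

Lemma dist2_lt_coord_close N S l1 l2 r : 0 < r -> dist2 N S l1 l2 < r ^ 2 -> coord_close N S l1 l2 r.
Proof.
  intros Hr H i j s Hi Hj Hs. pose proof (dist2_term_le N S l1 l2 i j s Hi Hj Hs).
  apply Rabs_def1; nra.
Qed.

Lemma coord_close_dist2_le N S l1 l2 r : coord_close N S l1 l2 r ->
  dist2 N S l1 l2 <= INR N * INR N * INR S * r ^ 2.
Proof.
  intros H. rewrite <- sum3_const. apply sum3_le. intros i j s Hi Hj Hs.
  specialize (H i j s Hi Hj Hs). apply Rabs_def2 in H. nra.
Qed.

Section FejerConvergence.

Variables (N m : nat) (lam : nat -> nat -> nat -> vec) (gap alpha : nat -> R) (C l : R).
Variable Opt : (nat -> nat -> vec) -> Prop.

Hypothesis gap_nonneg : forall t, 0 <= gap t.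
Hypothesis alpha_nonneg : forall t, 0 <= alpha t.
Hypothesis C_nonneg : 0 <= C.
Hypothesis alpha_sq_cv : Un_cv (fun T => rsum T (fun t => alpha t ^ 2)) l.
Hypothesis lam_fejer : forall lb, Opt lb -> forall t,
  dist2 N m (lam (t + 1)%nat) lb <= dist2 N m (lam t) lb - alpha t * gap t + alpha t ^ 2 * C.

Definition gap_cluster_point (lb : nat -> nat -> vec) : Prop :=
  forall eps T, 0 < eps -> exists t, (T <= t)%nat /\ gap t < eps /\ coord_close N m (lam t) lb eps.

Lemma fejer_cluster_point : cv_infty (fun T => rsum T alpha) -> (exists ls, Opt ls) ->
  exists lb, gap_cluster_point lb.
Proof.
  intros Hinf [ls Hls].
  set (D := fun t => dist2 N m (lam t) ls).
  assert (HD : forall t, D t <= D O + C * l).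
  { apply (fejer_bounded D gap alpha C l); auto. intros t; apply lam_fejer; exact Hls. }
  assert (Ex : forall k, exists t, (k <= t)%nat /\ gap t < / (INR k + 1)).
  { intros k. apply (fejer_gap_small D gap alpha C l); auto.
    - intros; apply dist2_nonneg.
    - intros t; apply lam_fejer; exact Hls.
    - apply inv_INR_succ_pos. }
  set (phi0 := fun k => proj1_sig (constructive_indefinite_description _ (Ex k))).
  assert (Hphi0 : forall k, (k <= phi0 k)%nat /\ gap (phi0 k) < / (INR k + 1)).
  { intros k. unfold phi0. destruct (constructive_indefinite_description _ (Ex k)) as [t Ht]. exact Ht. }
  destruct (bolzano_weierstrass_list triple_eq_dec (triples N m)
    (fun k q => lam (phi0 k) (fst (fst q)) (snd (fst q)) (snd q))
    (fun q => Rabs (ls (fst (fst q)) (snd (fst q)) (snd q)) + 1 + (D O + C * l)))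
    as [phi [lbl [Hphi Hcv]]].
  { intros k [[i j] s] Hq. apply in_triples in Hq as (Hi & Hj & Hs). simpl.
    set (x := lam (phi0 k) i j s - ls i j s).
    assert (x ^ 2 <= D O + C * l) by (eapply Rle_trans; [apply dist2_term_le; eauto|apply HD]).
    assert (Rabs x <= 1 + x ^ 2) by (unfold Rabs; destruct (Rcase_abs x); nra).
    replace (lam (phi0 k) i j s) with (x + ls i j s) by (unfold x; ring).
    pose proof (Rabs_triang x (ls i j s)). lra. }
  exists (fun i j s => lbl (i, j, s)). intros eps T Heps.
  destruct (cv_list_uniform _ _ _ Hcv eps Heps) as [K1 HK1].
  destruct (inv_INR_succ_lt eps Heps) as [K2 HK2].
  set (k := Nat.max (Nat.max K1 K2) T).
  destruct (Hphi0 (phi k)) as [Hle Hgap]. pose proof (Hphi k).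
  exists (phi0 (phi k)). split; [|split].
  - lia.
  - pose proof (inv_INR_succ_le K2 (phi k) ltac:(lia)). lra.
  - intros i j s Hi Hj Hs. apply (HK1 k ltac:(lia) (i, j, s)). apply in_triples. auto.
Qed.

(* A cluster point that is itself in Opt attracts the whole sequence: after a time where
   lam is close to it, the Fejer inequality lets the distance grow only by C times the
   (small) tail of sum alpha_t^2. *)
Lemma fejer_cluster_attracts lb : Opt lb -> gap_cluster_point lb ->
  forall r, 0 < r -> exists T, forall t, (T <= t)%nat -> coord_close N m (lam t) lb r.
Proof.
  intros Hlb Hcl r Hr.
  set (D := fun t => dist2 N m (lam t) lb).
  set (Q := INR N * INR N * INR m).
  assert (HQ : 0 <= Q) by (unfold Q; pose proof (pos_INR N); pose proof (pos_INR m);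
    apply Rmult_le_pos; [apply Rmult_le_pos|]; lra).
  assert (Hr2 : 0 < r ^ 2) by (apply pow_lt; exact Hr).
  destruct (rsum_sq_tail_lt alpha l alpha_sq_cv (r ^ 2 / (2 * (C + 1)))) as [T1 HT1].
  { apply Rdiv_lt_0_compat; lra. }
  set (e := r / (2 * (Q + 1))).
  destruct (Hcl e T1 ltac:(unfold e; apply Rdiv_lt_0_compat; lra)) as [t0 [Ht0 [_ Hclose]]].
  assert (HD0 : D t0 <= r ^ 2 / 4).
  { eapply Rle_trans; [apply coord_close_dist2_le; exact Hclose|]. fold Q.
    apply Rmult_le_reg_r with (4 * (Q + 1) ^ 2); [nra|].
    replace (Q * e ^ 2 * (4 * (Q + 1) ^ 2)) with (Q * r ^ 2) by (unfold e; field; lra).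
    nra. }
  exists t0. intros t Ht. apply dist2_lt_coord_close; [exact Hr|].
  pose proof (fejer_tail_le D gap alpha C gap_nonneg alpha_nonneg (lam_fejer lb Hlb) t0 (t - t0))
    as Htail.
  replace (t0 + (t - t0))%nat with t in Htail by lia.
  specialize (HT1 t0 (t - t0)%nat Ht0).
  assert (0 <= rsum (t - t0) (fun j => alpha (t0 + j)%nat ^ 2))
    by (apply rsum_nonneg; intros; apply pow2_ge_0).
  assert (C * rsum (t - t0) (fun j => alpha (t0 + j)%nat ^ 2) <= (C + 1) * (r ^ 2 / (2 * (C + 1)))) by nra.
  assert ((C + 1) * (r ^ 2 / (2 * (C + 1))) = r ^ 2 / 2) by (field; lra).
  unfold D in *. lra.
Qed.

Theorem fejer_convergence : cv_infty (fun T => rsum T alpha) -> (exists ls, Opt ls) ->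
  (forall lb, gap_cluster_point lb -> Opt lb) ->
  exists lb, Opt lb /\ forall r, 0 < r -> exists T, forall t, (T <= t)%nat -> coord_close N m (lam t) lb r.
Proof.
  intros Hinf Hne Hclosed.
  destruct (fejer_cluster_point Hinf Hne) as [lb Hlb].
  exists lb. split; [exact (Hclosed lb Hlb)|].
  exact (fejer_cluster_attracts lb (Hclosed lb Hlb) Hlb).
Qed.

End FejerConvergence.

(** * The distributed dual subgradient scheme *)

Section DistributedAllocation.

Variables (N S : nat) (n : nat -> nat) (X : nat -> vec -> Prop) (c : nat -> vec) (A : nat -> nat -> vec).
Variables (u0 : vec) (zs : nat -> vec) (pi : vec) (M : R).

Hypothesis zs_conv : forall i, (i < N)%nat -> in_conv (n i) (X i) (zs i).
Hypothesis zs_feas : forall s, (s < S)%nat -> rsum N (fun i => dot (n i) (A i s) (zs i)) <= u0 s.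
Hypothesis pi_nonneg : forall s, (s < S)%nat -> 0 <= pi s.
Hypothesis pi_lagrange : forall z : nat -> vec, (forall i, (i < N)%nat -> in_conv (n i) (X i) (z i)) ->
  rsum N (fun i => dot (n i) (c i) (zs i)) <= rsum N (fun i => dot (n i) (c i) (z i)) +
    rsum S (fun s => pi s * (rsum N (fun i => dot (n i) (A i s) (z i)) - u0 s)).
Hypothesis M_ge_pi : rsum S pi <= M.

Let Jr := rsum N (fun i => dot (n i) (c i) (zs i)).

Definition alloc_feas (yy zz : nat -> vec) (vv : nat -> R) : Prop :=
  forall i, (i < N)%nat -> p1_feas (n i) S (A i) (X i) (yy i) (zz i) (vv i).

Definition alloc_cost (zz : nat -> vec) (vv : nat -> R) : R :=
  rsum N (fun i => p1_cost (n i) (c i) M (zz i) (vv i)).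

(* The infimum of the total (P1) cost under the allocation yy is J^{LP_r}, the least
   possible value by exact_penalty. *)
Definition optimal_alloc (yy : nat -> vec) : Prop :=
  forall eta, 0 < eta -> exists zz vv, alloc_feas yy zz vv /\ alloc_cost zz vv <= Jr + eta.

(* The multiplier pi prices a total violation V of the coupling constraints at most
   (sum pi) V <= M V, which is what the penalty variables pay. *)
Lemma exact_penalty yy zz vv : (forall s, (s < S)%nat -> rsum N (fun i => yy i s) <= u0 s) ->
  alloc_feas yy zz vv -> Jr <= alloc_cost zz vv.
Proof.
  intros Hsum Hf. pose proof (pi_lagrange zz (fun i Hi => proj1 (Hf i Hi))) as H.
  set (V := rsum N vv).
  assert (HV : 0 <= V) by (apply rsum_nonneg; intros i Hi; apply (Hf i Hi)).
  assert (Hviol : rsum S (fun s => pi s * (rsum N (fun i => dot (n i) (A i s) (zz i)) - u0 s))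
                  <= rsum S (fun s => V * pi s)).
  { apply rsum_le. intros s Hs.
    assert (Hrow : rsum N (fun i => dot (n i) (A i s) (zz i)) <= rsum N (fun i => yy i s + vv i))
      by (apply rsum_le; intros i Hi; apply (Hf i Hi); exact Hs).
    rewrite rsum_plus in Hrow. fold V in Hrow.
    specialize (Hsum s Hs). specialize (pi_nonneg s Hs). nra. }
  rewrite rsum_scal in Hviol. unfold alloc_cost, p1_cost. rewrite rsum_plus, rsum_scal. fold V.
  assert (V * rsum S pi <= V * M) by (apply Rmult_le_compat_l; lra).
  unfold Jr. lra.
Qed.

Lemma optimal_alloc_shares :
  optimal_alloc (fun i s => dot (n i) (A i s) (zs i)
    + (u0 s - rsum N (fun k => dot (n k) (A k s) (zs k))) * kdelta i 0).
Proof.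
  intros eta Heta. exists zs, (fun _ => 0). split.
  - intros i Hi. split; [exact (zs_conv i Hi)|split; [lra|]]. intros s Hs.
    specialize (zs_feas s Hs). unfold kdelta. destruct (Nat.eqb i 0); lra.
  - unfold alloc_cost, p1_cost. rewrite (rsum_ext N _ (fun i => dot (n i) (c i) (zs i))) by (intros; ring).
    fold Jr. lra.
Qed.

Variables (adj : nat -> nat -> bool) (alpha : nat -> R).
Variables (y z : nat -> nat -> vec) (v : nat -> nat -> R) (mu : nat -> nat -> vec).

Hypothesis adj_conn : connected_undirected N adj.
Hypothesis y0_sum : forall s, (s < S)%nat -> rsum N (fun i => y O i s) = u0 s.
Hypothesis run_p1 : forall t i, (i < N)%nat ->
  p1_pd_opt (n i) S (c i) (A i) (X i) (y t i) M (z t i) (v t i) (mu t i).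
Hypothesis run_update : forall t i s, (i < N)%nat -> (s < S)%nat ->
  y (t + 1)%nat i s = y t i s + alpha t * rsum N (fun j => if adj i j then mu t i s - mu t j s else 0).

Definition run_cost (t : nat) : R := alloc_cost (z t) (v t).
Let lam := edge_state alpha adj mu.

Let adj_sym : forall a b, adj a b = adj b a.
Proof. apply adj_conn. Qed.

Lemma run_dual_ge t i : (i < N)%nat ->
  p1_dual_ge (n i) S (c i) (A i) (X i) (y t i) M (mu t i) (p1_cost (n i) (c i) M (z t i) (v t i)).
Proof. intros Hi. apply p1_dual_ge_cost. exact (run_p1 t i Hi). Qed.

Lemma run_feas t : alloc_feas (y t) (z t) (v t).
Proof. intros i Hi. apply (run_p1 t i Hi). Qed.

Lemma run_mult_bounds t i s : (i < N)%nat -> (s < S)%nat -> 0 <= mu t i s <= M.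
Proof.
  intros Hi Hs. destruct (run_p1 t i Hi) as [_ [Hmu _]].
  split; [exact (Hmu s Hs)|].
  eapply Rle_trans; [apply (rsum_term_le S (mu t i) s Hmu Hs)|].
  eapply p1_dual_ge_mult_le; [apply run_dual_ge; exact Hi|apply (run_feas t i Hi)].
Qed.

Lemma run_sum t s : (s < S)%nat -> rsum N (fun i => y t i s) = u0 s.
Proof.
  revert s. induction t as [|t IH]; intros s Hs; [exact (y0_sum s Hs)|].
  rewrite <- Nat.add_1_r.
  rewrite (rsum_ext N _ (fun i => y t i s + alpha t * rsum N (fun j => edge_diff adj (mu t) i j s)))
    by (intros i Hi; apply run_update; assumption).
  rewrite rsum_plus, rsum_scal, IH, (rsum_antisym N (fun i j => edge_diff adj (mu t) i j s)) by
    (assumption || (intros i j; unfold edge_diff; rewrite (adj_sym j i); destruct (adj i j); ring)).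
  ring.
Qed.

Lemma run_net_flow t i s : (i < N)%nat -> (s < S)%nat -> y t i s = y O i s + net_flow N adj (lam t) i s.
Proof.
  revert i s. induction t as [|t IH]; intros i s Hi Hs.
  - unfold lam. simpl. rewrite net_flow_zero. ring.
  - rewrite <- Nat.add_1_r, run_update, IH by assumption. unfold lam.
    rewrite net_flow_edge_state_succ by exact adj_sym. unfold edge_diff. ring.
Qed.

Lemma run_cost_ge t : Jr <= run_cost t.
Proof.
  apply (exact_penalty (y t)); [|apply run_feas].
  intros s Hs. rewrite run_sum by exact Hs. lra.
Qed.

Lemma run_cost_subgrad t yy zz vv : alloc_feas yy zz vv ->
  run_cost t <= alloc_cost zz vv + rsum N (fun i => rsum S (fun s => mu t i s * (yy i s - y t i s))).
Proof.
  intros Hf. unfold run_cost, alloc_cost. rewrite <- rsum_plus. apply rsum_le. intros i Hi.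
  apply (p1_dual_ge_subgrad _ _ _ _ _ _ _ _ _ (run_dual_ge t i Hi)); [|exact (Hf i Hi)].
  intros s Hs. apply (run_mult_bounds t i s Hi Hs).
Qed.

Lemma run_cross_le t yy : optimal_alloc yy ->
  rsum N (fun i => rsum S (fun s => mu t i s * (y t i s - yy i s))) <= Jr - run_cost t.
Proof.
  intros Hopt. apply le_epsilon. intros eta Heta.
  destruct (Hopt eta Heta) as [zz [vv [Hf Hc]]].
  pose proof (run_cost_subgrad t yy zz vv Hf).
  replace (rsum N (fun i => rsum S (fun s => mu t i s * (y t i s - yy i s))))
    with (- rsum N (fun i => rsum S (fun s => mu t i s * (yy i s - y t i s)))); [lra|].
  rewrite <- rsum_opp. apply rsum_ext; intros i _. rewrite <- rsum_opp. apply rsum_ext; intros; ring.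
Qed.

Hypothesis alpha_nonneg : forall t, 0 <= alpha t.

(* The y-update is a subgradient step of the dual of the allocation problem, written in the
   edge variables lam; the usual Fejer inequality holds for every optimal allocation. *)
Lemma run_fejer ls : optimal_alloc (fun i s => y O i s + net_flow N adj ls i s) -> forall t,
  dist2 N S (lam (t + 1)%nat) ls
  <= dist2 N S (lam t) ls - alpha t * (run_cost t - Jr) + alpha t ^ 2 * (INR N * INR N * INR S * M ^ 2 / 4).
Proof.
  intros Hopt t. unfold dist2.
  rewrite (sum3_ext N S _ (fun i j s => (lam t i j s - ls i j s + alpha t / 2 * edge_diff adj (mu t) i j s) ^ 2))
    by (intros; unfold lam; rewrite edge_state_succ; ring).
  rewrite sum3_sq_expand, (sum3_edge_diff N S adj (mu t) (fun i j s => lam t i j s - ls i j s)) by exact adj_sym.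
  assert (Hcross : rsum N (fun i => rsum S (fun s => mu t i s
                     * net_flow N adj (fun i j s => lam t i j s - ls i j s) i s)) <= Jr - run_cost t).
  { eapply Rle_trans; [|exact (run_cross_le t _ Hopt)]. right.
    apply rsum_ext; intros i Hi. apply rsum_ext; intros s Hs.
    rewrite net_flow_minus, (run_net_flow t i s Hi Hs). ring. }
  assert (Hsq : sum3 N S (fun i j s => edge_diff adj (mu t) i j s ^ 2) <= INR N * INR N * INR S * M ^ 2).
  { rewrite <- sum3_const. apply sum3_le. intros i j s Hi Hj Hs. unfold edge_diff.
    pose proof (run_mult_bounds t i s Hi Hs). pose proof (run_mult_bounds t j s Hj Hs).
    destruct (adj i j); nra. }
  pose proof (alpha_nonneg t).
  assert (2 * (alpha t / 2) * rsum N (fun i => rsum S (fun s => mu t i s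
            * net_flow N adj (fun i j s => lam t i j s - ls i j s) i s)) <= alpha t * (Jr - run_cost t))
    by nra.
  assert ((alpha t / 2) ^ 2 * sum3 N S (fun i j s => edge_diff adj (mu t) i j s ^ 2)
          <= (alpha t / 2) ^ 2 * (INR N * INR N * INR S * M ^ 2))
    by (apply Rmult_le_compat_l; [apply pow2_ge_0|exact Hsq]).
  lra.
Qed.

Hypothesis N_pos : (0 < N)%nat.
Hypothesis M_pos : 0 < M.

Lemma run_optimal_alloc_exists : exists ls, optimal_alloc (fun i s => y O i s + net_flow N adj ls i s).
Proof.
  set (Tz := fun s => rsum N (fun k => dot (n k) (A k s) (zs k))).
  set (ystar := fun i s => dot (n i) (A i s) (zs i) + (u0 s - Tz s) * kdelta i 0).
  destruct (net_flow_of_zero_sum N S adj (fun i s => ystar i s - y O i s) N_pos adj_conn)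
    as [ls Hls].
  { intros s Hs. unfold ystar.
    rewrite rsum_minus, y0_sum, rsum_plus, rsum_kdelta by assumption. unfold Tz. ring. }
  exists ls. intros eta Heta. destruct (optimal_alloc_shares eta Heta) as [zz [vv [Hf Hc]]].
  exists zz, vv. split; [|exact Hc]. intros i Hi. destruct (Hf i Hi) as [Hz [Hv Hrow]].
  split; [exact Hz|split; [exact Hv|]]. intros s Hs. rewrite Hls by assumption.
  specialize (Hrow s Hs). unfold ystar, Tz. lra.
Qed.

Lemma run_cluster_optimal lb : gap_cluster_point N S lam (fun t => run_cost t - Jr) lb ->
  optimal_alloc (fun i s => y O i s + net_flow N adj lb i s).
Proof.
  intros Hcl eta Heta.
  assert (HN : 0 < INR N) by (apply lt_0_INR; exact N_pos).
  set (rho := eta / (4 * M * INR N * INR N)).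
  assert (Hrho : 0 < rho).
  { unfold rho. apply Rdiv_lt_0_compat; [lra|]. repeat apply Rmult_lt_0_compat; lra. }
  destruct (Hcl (Rmin rho (eta / 2)) O) as [t [_ [Hgap Hclose]]].
  { apply Rmin_glb_lt; lra. }
  exists (z t), (fun i => v t i + 2 * INR N * rho). split.
  - intros i Hi. destruct (run_feas t i Hi) as [Hz [Hv Hrow]].
    split; [exact Hz|split; [pose proof (pos_INR N); nra|]]. intros s Hs.
    assert (Hnf : Rabs (net_flow N adj (fun a b u => lam t a b u - lb a b u) i s) <= 2 * INR N * rho).
    { apply net_flow_abs_le; [|exact Hi]. intros j k Hj Hk.
      left. eapply Rlt_le_trans; [apply Hclose; assumption|apply Rmin_l]. }
    rewrite net_flow_minus in Hnf. apply Rabs_le_bounds in Hnf.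
    specialize (Hrow s Hs). rewrite (run_net_flow t i s Hi Hs) in Hrow. lra.
  - unfold alloc_cost, p1_cost.
    rewrite (rsum_ext N _ (fun i => p1_cost (n i) (c i) M (z t i) (v t i) + M * (2 * INR N * rho)))
      by (intros; unfold p1_cost; ring).
    rewrite rsum_plus, rsum_const.
    assert (INR N * (M * (2 * INR N * rho)) = eta / 2) by (unfold rho; field; lra).
    pose proof (Rmin_r rho (eta / 2)). unfold run_cost, alloc_cost in Hgap. lra.
Qed.

Variable l : R.
Hypothesis alpha_cv_infty : cv_infty (fun T => rsum T alpha).
Hypothesis alpha_sq_cv : Un_cv (fun T => rsum T (fun t => alpha t ^ 2)) l.

Lemma run_alloc_converges : exists ybar, optimal_alloc ybar /\
  forall e, 0 < e -> exists T, forall t, (T <= t)%nat ->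
    forall i s, (i < N)%nat -> (s < S)%nat -> Rabs (ybar i s - y t i s) <= e.
Proof.
  destruct (fejer_convergence N S lam (fun t => run_cost t - Jr) alpha (INR N * INR N * INR S * M ^ 2 / 4) l
    (fun ls => optimal_alloc (fun i s => y O i s + net_flow N adj ls i s)))
    as [lb [Hopt Hcv]].
  - intros t. pose proof (run_cost_ge t). lra.
  - exact alpha_nonneg.
  - pose proof (pos_INR N). pose proof (pos_INR S). pose proof (pow2_ge_0 M).
    apply Rmult_le_pos; [repeat apply Rmult_le_pos|]; lra.
  - exact alpha_sq_cv.
  - exact run_fejer.
  - exact alpha_cv_infty.
  - exact run_optimal_alloc_exists.
  - exact run_cluster_optimal.
  - exists (fun i s => y O i s + net_flow N adj lb i s). split; [exact Hopt|].
    intros e He. assert (HN : 0 < INR N) by (apply lt_0_INR; exact N_pos).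
    destruct (Hcv (e / (2 * INR N)) ltac:(apply Rdiv_lt_0_compat; lra)) as [T HT].
    exists T. intros t Ht i s Hi Hs.
    rewrite (run_net_flow t i s Hi Hs).
    replace (y O i s + net_flow N adj lb i s - (y O i s + net_flow N adj (lam t) i s))
      with (- net_flow N adj (fun a b u => lam t a b u - lb a b u) i s)
      by (rewrite net_flow_minus; ring).
    rewrite Rabs_Ropp. replace e with (2 * INR N * (e / (2 * INR N))) by (field; lra).
    apply net_flow_abs_le; [|exact Hi]. intros j k Hj Hk. left. apply (HT t Ht); assumption.
Qed.

Theorem run_cost_eventually_le (eps : nat -> R) : (forall i, (i < N)%nat -> 0 < eps i) ->
  exists T, (0 < T)%nat /\ forall t, (T <= t)%nat -> run_cost t <= Jr + rsum N (fun i => norm1 S (mu t i) * eps i).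
Proof.
  intros Heps. destruct (pos_lower_bound N eps Heps) as [e0 [He0 He0le]].
  destruct run_alloc_converges as [ybar [Hopt Hcv]].
  destruct (Hcv e0 He0) as [T HT]. exists (Datatypes.S T). split; [lia|]. intros t Ht.
  apply le_epsilon. intros eta Heta. destruct (Hopt eta Heta) as [zz [vv [Hf Hc]]].
  pose proof (run_cost_subgrad t ybar zz vv Hf).
  assert (rsum N (fun i => rsum S (fun s => mu t i s * (ybar i s - y t i s)))
          <= rsum N (fun i => norm1 S (mu t i) * eps i)).
  { apply rsum_le. intros i Hi. unfold norm1. rewrite Rmult_comm, <- rsum_scal.
    apply rsum_le. intros s Hs. pose proof (run_mult_bounds t i s Hi Hs).
    pose proof (He0le i Hi). pose proof (HT t ltac:(lia) i s Hi Hs) as Hclose.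
    apply Rabs_le_bounds in Hclose. rewrite Rabs_pos_eq by lra. nra. }
  lra.
Qed.

End DistributedAllocation.

Section LagrangeBounds.

Variables (N S : nat) (n : nat -> nat) (X : nat -> vec -> Prop) (c : nat -> vec) (A : nat -> nat -> vec).
Variables (u0 : vec) (zs : nat -> vec) (pi : vec).

Hypothesis pi_nonneg : forall s, (s < S)%nat -> 0 <= pi s.
Hypothesis pi_lagrange : forall z : nat -> vec, (forall i, (i < N)%nat -> in_conv (n i) (X i) (z i)) ->
  rsum N (fun i => dot (n i) (c i) (zs i)) <= rsum N (fun i => dot (n i) (c i) (z i)) +
    rsum S (fun s => pi s * (rsum N (fun i => dot (n i) (A i s) (z i)) - u0 s)).

Lemma lagrange_le_relaxed (x : nat -> vec) r :
  (forall i, (i < N)%nat -> X i (x i)) ->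
  (forall s, (s < S)%nat -> rsum N (fun i => dot (n i) (A i s) (x i)) <= u0 s + r) ->
  rsum N (fun i => dot (n i) (c i) (zs i)) <= rsum N (fun i => dot (n i) (c i) (x i)) + rsum S pi * r.
Proof.
  intros Hx Hrow. pose proof (pi_lagrange x (fun i Hi => in_conv_of_mem _ _ _ (Hx i Hi))).
  assert (rsum S (fun s => pi s * (rsum N (fun i => dot (n i) (A i s) (x i)) - u0 s))
          <= rsum S (fun s => r * pi s)).
  { apply rsum_le. intros s Hs. specialize (Hrow s Hs). specialize (pi_nonneg s Hs). nra. }
  rewrite rsum_scal in *. lra.
Qed.

Lemma multiplier_sum_le_slater (zhat : nat -> vec) zeta (cmax cmin : nat -> R) :
  (forall i, (i < N)%nat -> in_conv (n i) (X i) (zs i)) ->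
  (forall i, (i < N)%nat -> in_conv (n i) (X i) (zhat i)) -> 0 < zeta ->
  (forall s, (s < S)%nat -> zeta <= u0 s - rsum N (fun i => dot (n i) (A i s) (zhat i))) ->
  (forall i, (i < N)%nat -> forall x, X i x -> dot (n i) (c i) x <= cmax i) ->
  (forall i, (i < N)%nat -> forall x, X i x -> cmin i <= dot (n i) (c i) x) ->
  rsum S pi <= / zeta * rsum N (fun i => cmax i - cmin i).
Proof.
  intros Hzs Hzh Hze Hslater Hmax Hmin. pose proof (pi_lagrange zhat Hzh) as H.
  assert (rsum S (fun s => pi s * (rsum N (fun i => dot (n i) (A i s) (zhat i)) - u0 s))
          <= rsum S (fun s => - zeta * pi s)).
  { apply rsum_le. intros s Hs. specialize (Hslater s Hs). specialize (pi_nonneg s Hs). nra. }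
  rewrite rsum_scal in *.
  assert (rsum N (fun i => dot (n i) (c i) (zhat i)) <= rsum N cmax)
    by (apply rsum_le; intros i Hi; apply dot_in_conv_le with (X i); auto).
  assert (rsum N cmin <= rsum N (fun i => dot (n i) (c i) (zs i)))
    by (apply rsum_le; intros i Hi; apply dot_in_conv_ge with (X i); auto).
  rewrite rsum_minus. apply Rmult_le_reg_l with zeta; [exact Hze|].
  rewrite <- Rmult_assoc, Rinv_r, Rmult_1_l by lra. lra.
Qed.

End LagrangeBounds.

Theorem theorem4
  (N S : nat) (Zd Rd Kd : nat -> nat)
  (c : nat -> vec) (A : nat -> nat -> vec) (* A i s = row s of A_i *)
  (D : nat -> nat -> vec) (d : nat -> vec) (b : vec)
  (HX : forall i, (i < N)%nat ->
     (exists x, mixed_int_poly (Zd i) (Rd i) (Kd i) (D i) (d i) x) /\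
     compact_set (Zd i + Rd i) (mixed_int_poly (Zd i) (Rd i) (Kd i) (D i) (d i)))
  (HMILPfeas : exists x : nat -> vec,
     (forall i, (i < N)%nat -> mixed_int_poly (Zd i) (Rd i) (Kd i) (D i) (d i) (x i)) /\
     forall s, (s < S)%nat -> rsum N (fun i => dot (Zd i + Rd i) (A i s) (x i)) <= b s)
  (JMILP : R)
  (HJ : is_min_value
     (fun x : nat -> vec =>
        (forall i, (i < N)%nat -> mixed_int_poly (Zd i) (Rd i) (Kd i) (D i) (d i) (x i)) /\
        forall s, (s < S)%nat -> rsum N (fun i => dot (Zd i + Rd i) (A i s) (x i)) <= b s)
     (fun x => rsum N (fun i => dot (Zd i + Rd i) (c i) (x i))) JMILP)
  (L : nat -> vec)
  (HL : forall i s, (i < N)%nat -> (s < S)%nat ->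
     is_min_value (mixed_int_poly (Zd i) (Rd i) (Kd i) (D i) (d i))
       (fun x => dot (Zd i + Rd i) (A i s) x) (L i s))
  (xL : nat -> vec) (lt : nat -> R)
  (HxL : forall i, (i < N)%nat ->
     (mixed_int_poly (Zd i) (Rd i) (Kd i) (D i) (d i) (xL i) /\
      forall s, (s < S)%nat -> dot (Zd i + Rd i) (A i s) (xL i) - L i s <= lt i) /\
     forall x l, mixed_int_poly (Zd i) (Rd i) (Kd i) (D i) (d i) x ->
       (forall s, (s < S)%nat -> dot (Zd i + Rd i) (A i s) x - L i s <= l) -> lt i <= l)
  (sigma : R)
  (Hsigma : exists m, is_max_value (fun p : nat * nat => (fst p < N)%nat /\ (snd p < S)%nat)
       (fun p => dot (Zd (fst p) + Rd (fst p)) (A (fst p) (snd p)) (xL (fst p)) - L (fst p) (snd p)) m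
     /\ sigma = (INR S + 1) * m)
  (delta : R) (Hdelta : 0 < delta)
  (* Assumption A *)
  (HA : exists zs : nat -> vec,
     let feas := fun z : nat -> vec =>
       (forall i, (i < N)%nat -> in_conv (Zd i + Rd i) (mixed_int_poly (Zd i) (Rd i) (Kd i) (D i) (d i)) (z i)) /\
       forall s, (s < S)%nat -> rsum N (fun i => dot (Zd i + Rd i) (A i s) (z i)) <= b s - (sigma + delta) in
     let opt := fun z : nat -> vec => feas z /\ forall z', feas z' ->
       rsum N (fun i => dot (Zd i + Rd i) (c i) (z i)) <= rsum N (fun i => dot (Zd i + Rd i) (c i) (z' i)) in
     opt zs /\ forall z', opt z' -> forall i k, (i < N)%nat -> (k < Zd i + Rd i)%nat -> z' i k = zs i k)
  (* Assumption C *)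
  (zhat : nat -> vec) (zeta : R)
  (Hzhat : forall i, (i < N)%nat ->
     in_conv (Zd i + Rd i) (mixed_int_poly (Zd i) (Rd i) (Kd i) (D i) (d i)) (zhat i))
  (Hzeta : is_min_value (fun s => (s < S)%nat)
     (fun s => b s - (sigma + delta) - rsum N (fun i => dot (Zd i + Rd i) (A i s) (zhat i))) zeta)
  (Hzeta_pos : 0 < zeta)
  (cmax cmin : nat -> R)
  (Hcmax : forall i, (i < N)%nat ->
     is_max_value (mixed_int_poly (Zd i) (Rd i) (Kd i) (D i) (d i)) (dot (Zd i + Rd i) (c i)) (cmax i))
  (Hcmin : forall i, (i < N)%nat ->
     is_min_value (mixed_int_poly (Zd i) (Rd i) (Kd i) (D i) (d i)) (dot (Zd i + Rd i) (c i)) (cmin i)) :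
  (* M sufficiently large *)
  exists Mbar : R, forall M : R, 0 < M -> Mbar <= M ->
  forall (adj : nat -> nat -> bool), connected_undirected N adj ->
  (* Assumption B *)
  forall (alpha : nat -> R), (forall t, 0 <= alpha t) ->
    cv_infty (fun T => rsum T alpha) ->
    (exists l, Un_cv (fun T => rsum T (fun t => alpha t ^ 2)) l) ->
  forall (eps : nat -> R), (forall i, (i < N)%nat -> 0 < eps i) ->
  (* y t i, z t i, v t i, mu t i, x t i are y_i^t, z_i^t, v_i^t, mu_i^t, x_i^t *)
  forall (y : nat -> nat -> vec) (z : nat -> nat -> vec) (v : nat -> nat -> R)
         (mu : nat -> nat -> vec) (x : nat -> nat -> vec),
    (forall s, (s < S)%nat -> rsum N (fun i => y O i s) = b s - (sigma + delta)) ->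
    (forall t i, (i < N)%nat ->
       p1_pd_opt (Zd i + Rd i) S (c i) (A i) (mixed_int_poly (Zd i) (Rd i) (Kd i) (D i) (d i))
         (y t i) M (z t i) (v t i) (mu t i)) ->
    (forall t i s, (i < N)%nat -> (s < S)%nat ->
       y (t + 1)%nat i s = y t i s + alpha t *
         rsum N (fun j => if adj i j then mu t i s - mu t j s else 0)) ->
    (forall t i, (i < N)%nat ->
       p3_lex_opt (Zd i + Rd i) S (c i) (A i) (mixed_int_poly (Zd i) (Rd i) (Kd i) (D i) (d i))
         (y t i) (x t i)) ->
  exists T : nat, (0 < T)%nat /\ forall t, (T <= t)%nat ->
    rsum N (fun i => dot (Zd i + Rd i) (c i) (x t i)) - JMILP <=
      rsum N (fun i => dot (Zd i + Rd i) (c i) (x t i)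
                       - (dot (Zd i + Rd i) (c i) (z t i) + M * v t i))
      + rsum N (fun i => norm1 S (mu t i) * eps i)
      + (/ zeta * rsum N (fun i => cmax i - cmin i)) * (sigma + delta).
Proof.
  set (X := fun i => mixed_int_poly (Zd i) (Rd i) (Kd i) (D i) (d i)).
  set (r := sigma + delta).
  set (Gam := / zeta * rsum N (fun i => cmax i - cmin i)).
  destruct Hsigma as [m [[[p [[Hp1 Hp2] Hpm]] _] Hsig]].
  assert (Hr : 0 <= r).
  { destruct (HxL (fst p) Hp1) as [[HxX _] _].
    pose proof (proj2 (HL (fst p) (snd p) Hp1 Hp2) (xL (fst p)) HxX). pose proof (pos_INR S).
    unfold r. rewrite Hsig. apply Rplus_le_le_0_compat; [apply Rmult_le_pos|]; lra. }
  destruct HJ as [[xm [[Hxm Hxmf] Hxmc]] _].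
  destruct HA as [zs [[[Hzs Hzsf] Hzsopt] _]].
  destruct (lp_multiplier N S (fun i => Zd i + Rd i)%nat X c A (fun s => b s - r) zs zhat zeta
    Hzs Hzsf (fun z' H1 H2 => Hzsopt z' (conj H1 H2)) Hzhat Hzeta_pos (proj2 Hzeta)) as [pi [Hpi Hlagr]].
  assert (HpiGam : rsum S pi <= Gam).
  { apply (multiplier_sum_le_slater N S _ X c A _ zs pi Hpi Hlagr zhat); auto.
    - exact (proj2 Hzeta).
    - intros i Hi. apply (Hcmax i Hi).
    - intros i Hi. apply (Hcmin i Hi). }
  assert (HJr : rsum N (fun i => dot (Zd i + Rd i) (c i) (zs i)) <= JMILP + Gam * r).
  { pose proof (lagrange_le_relaxed N S _ X c A _ zs pi Hpi Hlagr xm r Hxm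
      ltac:(intros s Hs; specialize (Hxmf s Hs); lra)) as H. cbv beta in H.
    rewrite Hxmc in H. pose proof (Rmult_le_compat_r r _ _ Hr HpiGam). lra. }
  exists Gam. intros M HM HMGam adj Hconn alpha Halpha Hinf [l Hl] eps Heps y z v mu x Hy0 Hrun Hupd _.
  destruct (run_cost_eventually_le N S _ X c A (fun s => b s - r) zs pi M Hzs Hzsf Hpi Hlagr
    ltac:(lra) adj alpha y z v mu Hconn Hy0 Hrun Hupd Halpha ltac:(lia) HM l Hinf Hl eps Heps)
    as [T [HT Hcost]].
  exists T. split; [exact HT|]. intros t Ht. specialize (Hcost t Ht).
  unfold run_cost, alloc_cost, p1_cost in Hcost. rewrite rsum_minus. fold r. lra.
Qed.
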